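(* Let $\mathcal V$ be as in the context. Then there is a strict 3-category $\mathcal V$-2-Cat (a category enriched over the cartesian monoidal category of strict 2-categories) whose 0-cells are the (small, strict) $\mathcal V$-2-categories, whose 1-cells are the $\mathcal V$-2-functors, whose 2-cells are the $\mathcal V$-2-natural transformations, and whose 3-cells are the $\mathcal V$-modifications, with the following compositions and identities. (i) 3-cells along a 2-cell: for $\mathcal V$-modifications $\mu:\alpha\to\beta$, $\nu:\beta\to\sigma$ (all $\alpha,\beta,\sigma:F\to G:\mathcal U\to\mathcal W$), $(\nu\circ\mu)_U=M\circ(\nu_U\otimes_1\mu_U)$; the identity on $\alpha$ is $(\mathbf 1_\alpha)_U=j_{\alpha_U(0)}$. (ii) 2-cells along a 1-cell: for $\gamma:T\to S$, $\beta:S\to R$, $(\beta*\gamma)_U=\mathcal M\circ(\beta_U\otimes^{(1)}_1\gamma_U)$ (so $(\beta*\gamma)_U(0)=\beta_U(0)\gamma_U(0)$); the identity on $T$ is $(1_T)_U=\mathcal J_{TU}$. 3-cells along a 1-cell: for $\mu:\psi\to\beta$ with $\psi,\beta:F\to G$ and $\nu:\gamma\to\sigma$ with $\gamma,\sigma:G\to H$, $\nu*\mu:=(\sigma*\mu)\circ(\nu*\psi)$, where for a 2-cell $\gamma:G\to H$ and a 3-cell $\mu$ between 2-cells $F\to G$, $(\gamma*\mu)_U=\mathcal M\circ(j_{\gamma_U(0)}\otimes_2\mu_U)$, and for a 2-cell $\rho:E\to F$, $(\mu*\rho)_U=\mathcal M\circ(\mu_U\otimes_2 j_{\rho_U(0)})$.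 (iii) 1-cells along a 0-cell: $(ST)U=S(TU)$ and $(ST)_{UU'}=S_{TU,TU'}\circ T_{UU'}$; the identity $1_{\mathcal U}$ is the identity on objects and homs. 2-cells along a 0-cell: for $\alpha:F\to H:\mathcal U\to\mathcal V'$ and $\gamma:G\to K:\mathcal V'\to\mathcal W$, $\gamma\alpha:=(\gamma H)*(G\alpha)$, where $(G\alpha)_U=G_{FU,HU}\circ\alpha_U$ and $(\gamma H)_U=\gamma_{HU}$. 3-cells along a 0-cell: for $\mu:\alpha\to\beta$ (with $\alpha,\beta:F\to H$) and $\nu:\gamma\to\rho$ (with $\gamma,\rho:G\to K$), $\nu\mu:=(\rho\mu)\circ(\nu\alpha)$, where $(\rho\mu)_U=\mathcal M\circ((K\mu)_U\otimes_2 j_{\rho_{FU}(0)})$, $(\nu\alpha)_U=\mathcal M\circ(j_{K(\alpha_U(0))}\otimes_2\nu_{FU})$ and $(K\mu)_U=K_{FU,HU}\circ\mu_U$. In particular all these composites are again $\mathcal V$-2-functors, $\mathcal V$-2-natural transformations and $\mathcal V$-modifications respectively, each composition is associative and unital, and all interchange (exchange) laws hold.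
   Context: Let $\mathcal V$ be a category with two functors $\otimes_1,\otimes_2:\mathcal V\times\mathcal V\to\mathcal V$ (the first two products of a $k$-fold monoidal category, $k\ge 2$; only these are used), natural isomorphisms $\alpha^i:(A\otimes_iB)\otimes_iC\to A\otimes_i(B\otimes_iC)$ satisfying Mac Lane's pentagon, an object $I$ which is a strict two-sided unit for both products, and a natural transformation $\eta_{ABCD}:(A\otimes_2B)\otimes_1(C\otimes_2D)\to(A\otimes_1C)\otimes_2(B\otimes_1D)$ such that $\eta_{ABII}=\eta_{IIAB}=1_{A\otimes_2B}$, $\eta_{AIBI}=\eta_{IAIB}=1_{A\otimes_1B}$, $(\alpha^1\otimes_2\alpha^1)\circ\eta_{(U\otimes_1W)(V\otimes_1X)YZ}\circ(\eta_{UVWX}\otimes_11)=\eta_{UV(W\otimes_1Y)(X\otimes_1Z)}\circ(1\otimes_1\eta_{WXYZ})\circ\alpha^1$ and $\alpha^2\circ(\eta_{UVXY}\otimes_21)\circ\eta_{(U\otimes_2V)W(X\otimes_2Y)Z}=(1\otimes_2\eta_{VWYZ})\circ\eta_{U(V\otimes_2W)X(Y\otimes_2Z)}\circ(\alpha^2\otimes_1\alpha^2)$. A $\mathcal V$-category $\mathcal A$ is a set of objects, hom-objects $\mathcal A(A,B)\in\mathcal V$, compositions $M_{ABC}:\mathcal A(B,C)\otimes_1\mathcal A(A,B)\to\mathcal A(A,C)$ and identities $j_A:I\to\mathcal A(A,A)$ with $M\circ(M\otimes_11)=M\circ(1\otimes_1M)\circ\alpha^1$ and $M\circ(j_B\otimes_11)=1=M\circ(1\otimes_1j_A)$.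 A $\mathcal V$-functor $T:\mathcal A\to\mathcal B$ is an object map with morphisms $T_{AB}:\mathcal A(A,B)\to\mathcal B(TA,TB)$ such that $T\circ M=M\circ(T\otimes_1T)$ and $T\circ j_A=j_{TA}$. For $\mathcal V$-categories $\mathcal A,\mathcal B$, $\mathcal A\otimes^{(1)}_1\mathcal B$ has objects $|\mathcal A|\times|\mathcal B|$, homs $\mathcal A(A,A')\otimes_2\mathcal B(B,B')$, composition $(M\otimes_2M)\circ\eta$ and identities $j_A\otimes_2j_B$; on $\mathcal V$-functors $F\otimes^{(1)}_1G$ acts by $F\otimes_2G$ on homs. The unit $\mathcal V$-category $\mathcal I$ has one object $0$, $\mathcal I(0,0)=I$, $M=j=1_I$; we identify $\mathcal I\otimes^{(1)}_1\mathcal A=\mathcal A=\mathcal A\otimes^{(1)}_1\mathcal I$. A $\mathcal V$-functor $\mathcal I\to\mathcal A$ is determined by an object $a$ (its hom component is $j_a$). A $\mathcal V$-2-category $\mathcal U$ is a set of objects, a $\mathcal V$-category $\mathcal U(A,B)$ for each pair, $\mathcal V$-functors $\mathcal M_{ABC}:\mathcal U(B,C)\otimes^{(1)}_1\mathcal U(A,B)\to\mathcal U(A,C)$ (write $gf=\mathcal M(g,f)$) and $\mathcal J_A:\mathcal I\to\mathcal U(A,A)$ ($1_A=\mathcal J_A(0)$), with $\mathcal M\circ(\mathcal M\otimes^{(1)}_11)=\mathcal M\circ(1\otimes^{(1)}_1\mathcal M)\circ a$ as $\mathcal V$-functors ($a$ sends $((f,g),h)\mapsto(f,(g,h))$ with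 hom components $\alpha^2$) and $\mathcal M\circ(\mathcal J_B\otimes^{(1)}_11)=1=\mathcal M\circ(1\otimes^{(1)}_1\mathcal J_A)$. The hom-components of $\mathcal M$ are also written $\mathcal M$. A $\mathcal V$-2-functor $T:\mathcal U\to\mathcal W$ is an object function with $\mathcal V$-functors $T_{UU'}:\mathcal U(U,U')\to\mathcal W(TU,TU')$ such that $T_{UU''}\circ\mathcal M=\mathcal M\circ(T_{U'U''}\otimes^{(1)}_1T_{UU'})$ and $T_{UU}\circ\mathcal J_U=\mathcal J_{TU}$. A $\mathcal V$-2-natural transformation $\theta:T\to S$ between $\mathcal V$-2-functors $\mathcal U\to\mathcal W$ assigns to each $U$ a $\mathcal V$-functor $\theta_U:\mathcal I\to\mathcal W(TU,SU)$ such that $\mathcal M\circ(\theta_{U'}\otimes^{(1)}_1T_{UU'})=\mathcal M\circ(S_{UU'}\otimes^{(1)}_1\theta_U)$ as $\mathcal V$-functors $\mathcal U(U,U')\to\mathcal W(TU,SU')$. A $\mathcal V$-modification $\mu:\theta\to\phi$ between $\mathcal V$-2-natural transformations $\theta,\phi:T\to S$ assigns to each $U$ a morphism $\mu_U:I\to\mathcal W(TU,SU)(\theta_U(0),\phi_U(0))$ such that for all $U,U'$ and $f,g\in|\mathcal U(U,U')|$, $\mathcal M\circ(\mu_{U'}\otimes_2T_{UU'})=\mathcal M\circ(S_{UU'}\otimes_2\mu_U)$ as morphisms $\mathcal U(U,U')(f,g)\to\mathcal W(TU,SU')(\theta_{U'}(0)Tf,\phi_{U'}(0)Tg)$ (this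 codomain equals $\mathcal W(TU,SU')(Sf\,\theta_U(0),Sg\,\phi_U(0))$ by naturality), using $I\otimes_2X=X=X\otimes_2I$. *)

From Stdlib Require Import JMeq.
Set Implicit Arguments.
Unset Strict Implicit.

(** * Categories, bifunctors, monoidal structures with strict unit     *)

Record Cat : Type := {
  Ob :> Type;
  Hom : Ob -> Ob -> Type;
  cmp : forall {A B C : Ob}, Hom B C -> Hom A B -> Hom A C;
  idm : forall A : Ob, Hom A A;
  cmp_assoc : forall A B C D (h : Hom C D) (g : Hom B C) (f : Hom A B),
      cmp h (cmp g f) = cmp (cmp h g) f;
  cmp_idl : forall A B (f : Hom A B), cmp (idm B) f = f;
  cmp_idr : forall A B (f : Hom A B), cmp f (idm A) = f }.
Arguments Hom {c} _ _.
Arguments cmp {c A B C} _ _.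
Arguments idm {c} A.
Notation "g ∘ f" := (cmp g f) (at level 40, left associativity).

(** The morphism induced by an equality of objects (used to express
    identifications such as [I ⊗ X = X] coming from strict units). *)
Definition castm (C : Cat) (A B : C) (e : A = B) : Hom A B :=
  match e in _ = B' return Hom A B' with eq_refl => idm A end.

Record Bifun (C : Cat) := {
  tob : C -> C -> C;
  tm : forall {A A' B B' : C}, Hom A A' -> Hom B B' -> Hom (tob A B) (tob A' B');
  tm_id : forall A B : C, tm (idm A) (idm B) = idm (tob A B);
  tm_cmp : forall (A A' A'' B B' B'' : C) (f : Hom A A') (f' : Hom A' A'')
             (g : Hom B B') (g' : Hom B' B''),
      tm (f' ∘ f) (g' ∘ g) = tm f' g' ∘ tm f g }.
Arguments tob {C} b _ _.
Arguments tm {C} b {A A' B B'} _ _.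

Record MonStr (C : Cat) (T : Bifun C) (I : C) := {
  alpha : forall A B D : C, Hom (tob T (tob T A B) D) (tob T A (tob T B D));
  alphainv : forall A B D : C, Hom (tob T A (tob T B D)) (tob T (tob T A B) D);
  alpha_inv1 : forall A B D, alphainv A B D ∘ alpha A B D = idm _;
  alpha_inv2 : forall A B D, alpha A B D ∘ alphainv A B D = idm _;
  alpha_nat : forall A A' B B' D D' (f : Hom A A') (g : Hom B B') (h : Hom D D'),
      alpha A' B' D' ∘ tm T (tm T f g) h = tm T f (tm T g h) ∘ alpha A B D;
  pentagon : forall A B D E : C,
      alpha A B (tob T D E) ∘ alpha (tob T A B) D E
      = tm T (idm A) (alpha B D E) ∘ alpha A (tob T B D) E ∘ tm T (alpha A B D) (idm E);
  unit_l : forall A : C, tob T I A = A;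
  unit_r : forall A : C, tob T A I = A;
  unit_lm : forall A B (f : Hom A B), JMeq (tm T (idm I) f) f;
  unit_rm : forall A B (f : Hom A B), JMeq (tm T f (idm I)) f;
  alpha_unit1 : forall B D, JMeq (alpha I B D) (idm (tob T B D));
  alpha_unit2 : forall A D, JMeq (alpha A I D) (idm (tob T A D));
  alpha_unit3 : forall A B, JMeq (alpha A B I) (idm (tob T A B)) }.
Arguments alpha {C T I} m A B D.

(** The first two products of a k-fold monoidal category (k >= 2). *)
Record TwoFold := {
  VC :> Cat;
  T1 : Bifun VC;
  T2 : Bifun VC;
  Iu : VC;
  mon1 : MonStr T1 Iu;
  mon2 : MonStr T2 Iu;
  eta : forall A B D E : VC,
      Hom (tob T1 (tob T2 A B) (tob T2 D E)) (tob T2 (tob T1 A D) (tob T1 B E));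
  eta_nat : forall A A' B B' D D' E E' (f : Hom A A') (g : Hom B B')
              (h : Hom D D') (k : Hom E E'),
      eta A' B' D' E' ∘ tm T1 (tm T2 f g) (tm T2 h k)
      = tm T2 (tm T1 f h) (tm T1 g k) ∘ eta A B D E;
  eta_u1 : forall A B, JMeq (eta A B Iu Iu) (idm (tob T2 A B));
  eta_u2 : forall A B, JMeq (eta Iu Iu A B) (idm (tob T2 A B));
  eta_u3 : forall A B, JMeq (eta A Iu B Iu) (idm (tob T1 A B));
  eta_u4 : forall A B, JMeq (eta Iu A Iu B) (idm (tob T1 A B));
  eta_hex1 : forall U V W X Y Z : VC,
      tm T2 (alpha mon1 U W Y) (alpha mon1 V X Z)
        ∘ eta (tob T1 U W) (tob T1 V X) Y Z
        ∘ tm T1 (eta U V W X) (idm (tob T2 Y Z))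
      = eta U V (tob T1 W Y) (tob T1 X Z)
        ∘ tm T1 (idm (tob T2 U V)) (eta W X Y Z)
        ∘ alpha mon1 (tob T2 U V) (tob T2 W X) (tob T2 Y Z);
  eta_hex2 : forall U V W X Y Z : VC,
      alpha mon2 (tob T1 U X) (tob T1 V Y) (tob T1 W Z)
        ∘ tm T2 (eta U V X Y) (idm (tob T1 W Z))
        ∘ eta (tob T2 U V) W (tob T2 X Y) Z
      = tm T2 (idm (tob T1 U X)) (eta V W Y Z)
        ∘ eta U (tob T2 V W) X (tob T2 Y Z)
        ∘ tm T1 (alpha mon2 U V W) (alpha mon2 X Y Z) }.
Arguments eta {t} A B D E.

(** * V-categories and V-functors (raw data + axioms)                   *)

Section VCats.
Context {V : TwoFold}.

Record VCatD := {
  vob : Type;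
  vhom : vob -> vob -> V;
  vM : forall a b c, Hom (tob (T1 V) (vhom b c) (vhom a b)) (vhom a c);
  vj : forall a, Hom (Iu V) (vhom a a) }.
Arguments vob : clear implicits.
Arguments vhom : clear implicits.
Arguments vM : clear implicits.
Arguments vj : clear implicits.

Definition is_VCat (A : VCatD) : Prop :=
  (forall a b c d,
      vM A a b d ∘ tm (T1 V) (vM A b c d) (idm (vhom A a b))
      = vM A a c d ∘ tm (T1 V) (idm (vhom A c d)) (vM A a b c)
          ∘ alpha (mon1 V) _ _ _) /\
  (forall a b, JMeq (vM A a b b ∘ tm (T1 V) (vj A b) (idm (vhom A a b)))
                    (idm (vhom A a b))) /\
  (forall a b, JMeq (vM A a a b ∘ tm (T1 V) (idm (vhom A a b)) (vj A a))
                    (idm (vhom A a b))).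

Record VFunD (A B : VCatD) := {
  fob : vob A -> vob B;
  fhom : forall a b, Hom (vhom A a b) (vhom B (fob a) (fob b)) }.
Arguments fob {A B} v _.
Arguments fhom {A B} v a b.

Definition is_VFun (A B : VCatD) (F : VFunD A B) : Prop :=
  (forall a b c, fhom F a c ∘ vM A a b c
                 = vM B _ _ _ ∘ tm (T1 V) (fhom F b c) (fhom F a b)) /\
  (forall a, fhom F a a ∘ vj A a = vj B (fob F a)).

Definition vfcomp (A B C : VCatD) (G : VFunD B C) (F : VFunD A B) : VFunD A C :=
  @Build_VFunD A C (fun a => fob G (fob F a)) (fun a b => fhom G _ _ ∘ fhom F a b).

Definition vfid (A : VCatD) : VFunD A A :=
  @Build_VFunD A A (fun a => a) (fun a b => idm _).

Definition tensVC (A B : VCatD) : VCatD :=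
  {| vob := (vob A * vob B)%type;
     vhom := fun x y => tob (T2 V) (vhom A (fst x) (fst y)) (vhom B (snd x) (snd y));
     vM := fun x y z => tm (T2 V) (vM A (fst x) (fst y) (fst z)) (vM B (snd x) (snd y) (snd z))
                        ∘ eta _ _ _ _;
     vj := fun x => tm (T2 V) (vj A (fst x)) (vj B (snd x))
                    ∘ castm (eq_sym (unit_l (mon2 V) (Iu V))) |}.

Definition unitVC : VCatD :=
  {| vob := unit;
     vhom := fun _ _ => Iu V;
     vM := fun _ _ _ => castm (unit_l (mon1 V) (Iu V));
     vj := fun _ => idm (Iu V) |}.

Definition vftens (A B A' B' : VCatD) (F : VFunD A A') (G : VFunD B B')
  : VFunD (tensVC A B) (tensVC A' B') :=
  @Build_VFunD (tensVC A B) (tensVC A' B') (fun x : vob A * vob B => (fob F (fst x), fob G (snd x)))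
     (fun (x y : vob A * vob B) => tm (T2 V) (fhom F (fst x) (fst y)) (fhom G (snd x) (snd y))).

Definition vfassoc (A B C : VCatD)
  : VFunD (tensVC (tensVC A B) C) (tensVC A (tensVC B C)) :=
  @Build_VFunD (tensVC (tensVC A B) C) (tensVC A (tensVC B C)) ( fun p : (vob A * vob B) * vob C => (fst (fst p), (snd (fst p), snd p)))
     (fun (p q : (vob A * vob B) * vob C) => alpha (mon2 V) _ _ _).

Definition lunit_inv (A : VCatD) : VFunD A (tensVC unitVC A) :=
  @Build_VFunD A (tensVC unitVC A) (fun a => (tt, a))
     (fun a b => castm (eq_sym (unit_l (mon2 V) (vhom A a b)))).
Definition runit_inv (A : VCatD) : VFunD A (tensVC A unitVC) :=
  @Build_VFunD A (tensVC A unitVC) (fun a => (a, tt))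
     (fun a b => castm (eq_sym (unit_r (mon2 V) (vhom A a b)))).

(** The object [F(0)] of a V-functor [F : I -> A]. *)
Definition pt (A : VCatD) (F : VFunD unitVC A) : vob A := fob F tt.

End VCats.
Arguments VCatD V : clear implicits.
Arguments vob {V} v.
Arguments vhom {V} v _ _.
Arguments vM {V} v a b c.
Arguments vj {V} v a.
Arguments fob {V A B} v _.
Arguments fhom {V A B} v a b.

(** * V-2-categories, V-2-functors, V-2-natural transformations,
      V-modifications                                                   *)

Section V2.
Context {V : TwoFold}.

Record V2CatD := {
  c0 : Type;
  chom : c0 -> c0 -> VCatD V;
  cM : forall A B C, VFunD (tensVC (chom B C) (chom A B)) (chom A C);
  cJ : forall A, VFunD unitVC (chom A A) }.
Arguments c0 : clear implicits.
Arguments chom : clear implicits.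
Arguments cM : clear implicits.
Arguments cJ : clear implicits.

Definition is_V2Cat (U : V2CatD) : Prop :=
  (forall A B, is_VCat (chom U A B)) /\
  (forall A B C, is_VFun (cM U A B C)) /\
  (forall A, is_VFun (cJ U A)) /\
  (forall A B C D,
      vfcomp (cM U A B D) (vftens (cM U B C D) (vfid (chom U A B)))
      = vfcomp (vfcomp (cM U A C D) (vftens (vfid (chom U C D)) (cM U A B C)))
               (vfassoc _ _ _)) /\
  (forall A B, vfcomp (vfcomp (cM U A B B) (vftens (cJ U B) (vfid (chom U A B))))
                      (lunit_inv _) = vfid (chom U A B)) /\
  (forall A B, vfcomp (vfcomp (cM U A A B) (vftens (vfid (chom U A B)) (cJ U A)))
                      (runit_inv _) = vfid (chom U A B)).

Record V2FunD (U W : V2CatD) := {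
  F0 : c0 U -> c0 W;
  F1 : forall A B, VFunD (chom U A B) (chom W (F0 A) (F0 B)) }.
Arguments F0 {U W} v _.
Arguments F1 {U W} v A B.

Definition is_V2Fun (U W : V2CatD) (T : V2FunD U W) : Prop :=
  (forall A B, is_VFun (F1 T A B)) /\
  (forall A B C, vfcomp (F1 T A C) (cM U A B C)
                 = vfcomp (cM W _ _ _) (vftens (F1 T B C) (F1 T A B))) /\
  (forall A, vfcomp (F1 T A A) (cJ U A) = cJ W (F0 T A)).

Definition V2NatD (U W : V2CatD) (T S : V2FunD U W) : Type :=
  forall A : c0 U, VFunD unitVC (chom W (F0 T A) (F0 S A)).

Definition is_V2Nat (U W : V2CatD) (T S : V2FunD U W) (th : V2NatD T S) : Prop :=
  (forall A, is_VFun (th A)) /\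
  (forall A A',
      vfcomp (vfcomp (cM W _ _ _) (vftens (th A') (F1 T A A'))) (lunit_inv _)
      = vfcomp (vfcomp (cM W _ _ _) (vftens (F1 S A A') (th A))) (runit_inv _)).

Definition V2ModD (U W : V2CatD) (T S : V2FunD U W) (th ph : V2NatD T S) : Type :=
  forall A : c0 U,
    Hom (Iu V) (vhom (chom W (F0 T A) (F0 S A)) (pt (th A)) (pt (ph A))).

(** Naturality of a modification; the two codomains are equal objects
    by naturality of [th] and [ph], hence the heterogeneous equality. *)
Definition is_V2Mod (U W : V2CatD) (T S : V2FunD U W) (th ph : V2NatD T S)
  (mu : V2ModD th ph) : Prop :=
  forall A A' (f g : vob (chom U A A')),
    JMeq (fhom (cM W (F0 T A) (F0 T A') (F0 S A'))
               (pt (th A'), fob (F1 T A A') f) (pt (ph A'), fob (F1 T A A') g)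
          ∘ tm (T2 V) (mu A') (fhom (F1 T A A') f g)
          ∘ castm (eq_sym (unit_l (mon2 V) _)))
         (fhom (cM W (F0 T A) (F0 S A) (F0 S A'))
               (fob (F1 S A A') f, pt (th A)) (fob (F1 S A A') g, pt (ph A))
          ∘ tm (T2 V) (fhom (F1 S A A') f g) (mu A)
          ∘ castm (eq_sym (unit_r (mon2 V) _))).

Definition vcomp3 (U W : V2CatD) (T S : V2FunD U W) (al be si : V2NatD T S)
  (nu : V2ModD be si) (mu : V2ModD al be) : V2ModD al si :=
  fun A => vM _ (pt (al A)) (pt (be A)) (pt (si A)) ∘ tm (T1 V) (nu A) (mu A)
           ∘ castm (eq_sym (unit_l (mon1 V) (Iu V))).

Definition id3 (U W : V2CatD) (T S : V2FunD U W) (al : V2NatD T S) : V2ModD al al :=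
  fun A => vj _ (pt (al A)).

Definition bstar (U W : V2CatD) (T S R : V2FunD U W)
  (be : V2NatD S R) (ga : V2NatD T S) : V2NatD T R :=
  fun A => vfcomp (vfcomp (cM W (F0 T A) (F0 S A) (F0 R A)) (vftens (be A) (ga A)))
                  (lunit_inv unitVC).

Definition id2 (U W : V2CatD) (T : V2FunD U W) : V2NatD T T :=
  fun A => cJ W (F0 T A).

Definition whiskL3 (U W : V2CatD) (F G H : V2FunD U W) (ga : V2NatD G H)
  (ps be : V2NatD F G) (mu : V2ModD ps be) : V2ModD (bstar ga ps) (bstar ga be) :=
  fun A => fhom (cM W _ _ _) (pt (ga A), pt (ps A)) (pt (ga A), pt (be A))
           ∘ tm (T2 V) (vj _ (pt (ga A))) (mu A)
           ∘ castm (eq_sym (unit_l (mon2 V) (Iu V))).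

Definition whiskR3 (U W : V2CatD) (E F G : V2FunD U W) (ps be : V2NatD F G)
  (mu : V2ModD ps be) (rh : V2NatD E F) : V2ModD (bstar ps rh) (bstar be rh) :=
  fun A => fhom (cM W _ _ _) (pt (ps A), pt (rh A)) (pt (be A), pt (rh A))
           ∘ tm (T2 V) (mu A) (vj _ (pt (rh A)))
           ∘ castm (eq_sym (unit_l (mon2 V) (Iu V))).

Definition hstar3 (U W : V2CatD) (F G H : V2FunD U W) (ga si : V2NatD G H)
  (ps be : V2NatD F G) (nu : V2ModD ga si) (mu : V2ModD ps be)
  : V2ModD (bstar ga ps) (bstar si be) :=
  vcomp3 (whiskL3 si mu) (whiskR3 nu ps).

Definition comp1 (U V' W : V2CatD) (S : V2FunD V' W) (T : V2FunD U V') : V2FunD U W :=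
  {| F0 := fun A => F0 S (F0 T A);
     F1 := fun A B => vfcomp (F1 S (F0 T A) (F0 T B)) (F1 T A B) |}.

Definition id1 (U : V2CatD) : V2FunD U U :=
  {| F0 := fun A => A; F1 := fun A B => vfid (chom U A B) |}.

Definition whiskL2 (U V' W : V2CatD) (G : V2FunD V' W) (F H : V2FunD U V')
  (al : V2NatD F H) : V2NatD (comp1 G F) (comp1 G H) :=
  fun A => vfcomp (F1 G (F0 F A) (F0 H A)) (al A).

Definition whiskR2 (U V' W : V2CatD) (G K : V2FunD V' W) (ga : V2NatD G K)
  (H : V2FunD U V') : V2NatD (comp1 G H) (comp1 K H) :=
  fun A => ga (F0 H A).

Definition hcomp2 (U V' W : V2CatD) (F H : V2FunD U V') (G K : V2FunD V' W)
  (ga : V2NatD G K) (al : V2NatD F H) : V2NatD (comp1 G F) (comp1 K H) :=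
  bstar (whiskR2 ga H) (whiskL2 G al).

Definition whiskL3F (U V' W : V2CatD) (K : V2FunD V' W) (F H : V2FunD U V')
  (al be : V2NatD F H) (mu : V2ModD al be) : V2ModD (whiskL2 K al) (whiskL2 K be) :=
  fun A => fhom (F1 K (F0 F A) (F0 H A)) (pt (al A)) (pt (be A)) ∘ mu A.

Definition whiskR3F (U V' W : V2CatD) (G K : V2FunD V' W) (ga rh : V2NatD G K)
  (nu : V2ModD ga rh) (F : V2FunD U V') : V2ModD (whiskR2 ga F) (whiskR2 rh F) :=
  fun A => nu (F0 F A).

(** Its source and target
    are [(K al) * (ga F)] and [(K be) * (rh F)], which equal [ga al] and
    [rh be] by naturality (this is part of the theorem). *)
Definition hcomp3 (U V' W : V2CatD) (F H : V2FunD U V') (G K : V2FunD V' W)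
  (ga rh : V2NatD G K) (al be : V2NatD F H) (nu : V2ModD ga rh) (mu : V2ModD al be)
  : V2ModD (bstar (whiskL2 K al) (whiskR2 ga F)) (bstar (whiskL2 K be) (whiskR2 rh F)) :=
  vcomp3 (whiskR3 (whiskL3F K mu) (whiskR2 rh F))
         (whiskL3 (whiskL2 K al) (whiskR3F nu F)).

End V2.
Arguments V2CatD V : clear implicits.
Arguments c0 {V} v.
Arguments chom {V} v _ _.
Arguments cM {V} v A B C.
Arguments cJ {V} v A.
Arguments F0 {V U W} v _.
Arguments F1 {V U W} v A B.

(** * Cells of V-2-Cat (data bundled with their axioms)                 *)

Record V2Cat (V : TwoFold) := { v2d :> V2CatD V; v2ok : is_V2Cat v2d }.
Record V2Fun (V : TwoFold) (U W : V2Cat V) := { fd :> V2FunD U W; fok : is_V2Fun fd }.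
Record V2Nat (V : TwoFold) (U W : V2Cat V) (T S : V2Fun U W) :=
  { nd :> V2NatD T S; nok : is_V2Nat nd }.
Record V2Mod (V : TwoFold) (U W : V2Cat V) (T S : V2Fun U W) (al be : V2Nat T S) :=
  { md :> V2ModD al be; mok : is_V2Mod md }.

Section Laws.
Variable V : TwoFold.

(** For 3-cells along a 0-cell, the composite [nu mu] is defined with
    source [(K al)*(ga F)] and target [(K be)*(rh F)]; that these are
    the 2-cells [ga al] and [rh be] is the equation [hcomp2_alt]. *)
Definition closure_laws : Prop :=
  (forall (U V' W : V2Cat V) (S : V2Fun V' W) (T : V2Fun U V'), is_V2Fun (comp1 S T)) /\
  (forall U : V2Cat V, is_V2Fun (id1 U)) /\
  (forall (U W : V2Cat V) (T S R : V2Fun U W) (be : V2Nat S R) (ga : V2Nat T S),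
      is_V2Nat (bstar be ga)) /\
  (forall (U W : V2Cat V) (T : V2Fun U W), is_V2Nat (id2 T)) /\
  (forall (U V' W : V2Cat V) (G : V2Fun V' W) (F H : V2Fun U V') (al : V2Nat F H),
      is_V2Nat (whiskL2 G al)) /\
  (forall (U V' W : V2Cat V) (G K : V2Fun V' W) (ga : V2Nat G K) (H : V2Fun U V'),
      is_V2Nat (whiskR2 ga H)) /\
  (forall (U V' W : V2Cat V) (F H : V2Fun U V') (G K : V2Fun V' W)
          (ga : V2Nat G K) (al : V2Nat F H), is_V2Nat (hcomp2 ga al)) /\
  (forall (U W : V2Cat V) (T S : V2Fun U W) (al be si : V2Nat T S)
          (mu : V2Mod al be) (nu : V2Mod be si), is_V2Mod (vcomp3 nu mu)) /\
  (forall (U W : V2Cat V) (T S : V2Fun U W) (al : V2Nat T S), is_V2Mod (id3 al)) /\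
  (forall (U W : V2Cat V) (F G H : V2Fun U W) (ga : V2Nat G H) (ps be : V2Nat F G)
          (mu : V2Mod ps be), is_V2Mod (whiskL3 ga mu)) /\
  (forall (U W : V2Cat V) (E F G : V2Fun U W) (ps be : V2Nat F G) (mu : V2Mod ps be)
          (rh : V2Nat E F), is_V2Mod (whiskR3 mu rh)) /\
  (forall (U W : V2Cat V) (F G H : V2Fun U W) (ga si : V2Nat G H) (ps be : V2Nat F G)
          (nu : V2Mod ga si) (mu : V2Mod ps be), is_V2Mod (hstar3 nu mu)) /\
  (forall (U V' W : V2Cat V) (K : V2Fun V' W) (F H : V2Fun U V') (al be : V2Nat F H)
          (mu : V2Mod al be), is_V2Mod (whiskL3F K mu)) /\
  (forall (U V' W : V2Cat V) (G K : V2Fun V' W) (ga rh : V2Nat G K) (nu : V2Mod ga rh)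
          (F : V2Fun U V'), is_V2Mod (whiskR3F nu F)) /\
  (forall (U V' W : V2Cat V) (F H : V2Fun U V') (G K : V2Fun V' W)
          (ga : V2Nat G K) (al : V2Nat F H),
      hcomp2 ga al = bstar (whiskL2 K al) (whiskR2 ga F)) /\
  (forall (U V' W : V2Cat V) (F H : V2Fun U V') (G K : V2Fun V' W)
          (ga rh : V2Nat G K) (al be : V2Nat F H) (nu : V2Mod ga rh) (mu : V2Mod al be),
      is_V2Mod (hcomp3 nu mu)).

Definition hom_2category_laws : Prop :=
  (forall (U W : V2Cat V) (T S : V2Fun U W) (al be si ta : V2Nat T S)
          (mu : V2Mod al be) (nu : V2Mod be si) (xi : V2Mod si ta),
      vcomp3 (vcomp3 xi nu) mu = vcomp3 xi (vcomp3 nu mu)) /\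
  (forall (U W : V2Cat V) (T S : V2Fun U W) (al be : V2Nat T S) (mu : V2Mod al be),
      vcomp3 (id3 be) mu = mu /\ vcomp3 mu (id3 al) = mu) /\
  (forall (U W : V2Cat V) (T S R Q : V2Fun U W)
          (ga : V2Nat T S) (be : V2Nat S R) (de : V2Nat R Q),
      bstar (bstar de be) ga = bstar de (bstar be ga)) /\
  (forall (U W : V2Cat V) (T S : V2Fun U W) (ga : V2Nat T S),
      bstar (id2 S) ga = ga /\ bstar ga (id2 T) = ga) /\
  (forall (U W : V2Cat V) (F G H K : V2Fun U W)
          (ps be : V2Nat F G) (ga si : V2Nat G H) (de ep : V2Nat H K)
          (mu : V2Mod ps be) (nu : V2Mod ga si) (xi : V2Mod de ep),
      JMeq (hstar3 (hstar3 xi nu) mu) (hstar3 xi (hstar3 nu mu))) /\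
  (forall (U W : V2Cat V) (F G : V2Fun U W) (ps be : V2Nat F G) (mu : V2Mod ps be),
      JMeq (hstar3 (id3 (id2 G)) mu) (md mu) /\ JMeq (hstar3 mu (id3 (id2 F))) (md mu)) /\
  (forall (U W : V2Cat V) (F G H : V2Fun U W)
          (ps be om : V2Nat F G) (ga si ta : V2Nat G H)
          (mu : V2Mod ps be) (mu' : V2Mod be om) (nu : V2Mod ga si) (nu' : V2Mod si ta),
      hstar3 (vcomp3 nu' nu) (vcomp3 mu' mu) = vcomp3 (hstar3 nu' mu') (hstar3 nu mu)) /\
  (forall (U W : V2Cat V) (F G H : V2Fun U W) (ps : V2Nat F G) (ga : V2Nat G H),
      hstar3 (id3 ga) (id3 ps) = id3 (bstar ga ps)).

Definition composition_2functor_laws : Prop :=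
  (forall (U V' W : V2Cat V) (F F' F'' : V2Fun U V') (G G' G'' : V2Fun V' W)
          (al : V2Nat F F') (al' : V2Nat F' F'') (ga : V2Nat G G') (ga' : V2Nat G' G''),
      hcomp2 (bstar ga' ga) (bstar al' al) = bstar (hcomp2 ga' al') (hcomp2 ga al)) /\
  (forall (U V' W : V2Cat V) (F : V2Fun U V') (G : V2Fun V' W),
      hcomp2 (id2 G) (id2 F) = id2 (comp1 G F)) /\
  (forall (U V' W : V2Cat V) (F H : V2Fun U V') (G K : V2Fun V' W)
          (al be om : V2Nat F H) (ga rh ta : V2Nat G K)
          (mu : V2Mod al be) (mu' : V2Mod be om) (nu : V2Mod ga rh) (nu' : V2Mod rh ta),
      hcomp3 (vcomp3 nu' nu) (vcomp3 mu' mu) = vcomp3 (hcomp3 nu' mu') (hcomp3 nu mu)) /\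
  (forall (U V' W : V2Cat V) (F H : V2Fun U V') (G K : V2Fun V' W)
          (al : V2Nat F H) (ga : V2Nat G K),
      JMeq (hcomp3 (id3 ga) (id3 al)) (id3 (hcomp2 ga al))) /\
  (forall (U V' W : V2Cat V) (F F' F'' : V2Fun U V') (G G' G'' : V2Fun V' W)
          (al be : V2Nat F F') (al' be' : V2Nat F' F'')
          (ga rh : V2Nat G G') (ga' rh' : V2Nat G' G'')
          (mu : V2Mod al be) (mu' : V2Mod al' be') (nu : V2Mod ga rh) (nu' : V2Mod ga' rh'),
      JMeq (hcomp3 (hstar3 nu' nu) (hstar3 mu' mu))
           (hstar3 (hcomp3 nu' mu') (hcomp3 nu mu))).

Definition associativity_unit_laws : Prop :=
  (forall (U1 U2 U3 U4 : V2Cat V) (F : V2Fun U1 U2) (G : V2Fun U2 U3) (H : V2Fun U3 U4),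
      comp1 (comp1 H G) F = comp1 H (comp1 G F)) /\
  (forall (U W : V2Cat V) (F : V2Fun U W),
      comp1 (id1 W) F = fd F /\ comp1 F (id1 U) = fd F) /\
  (forall (U1 U2 U3 U4 : V2Cat V) (F F' : V2Fun U1 U2) (G G' : V2Fun U2 U3)
          (H H' : V2Fun U3 U4) (al : V2Nat F F') (ga : V2Nat G G') (de : V2Nat H H'),
      hcomp2 (hcomp2 de ga) al = hcomp2 de (hcomp2 ga al)) /\
  (forall (U W : V2Cat V) (F H : V2Fun U W) (al : V2Nat F H),
      hcomp2 (id2 (id1 W)) al = nd al /\ hcomp2 al (id2 (id1 U)) = nd al) /\
  (forall (U1 U2 U3 U4 : V2Cat V) (F F' : V2Fun U1 U2) (G G' : V2Fun U2 U3)
          (H H' : V2Fun U3 U4) (al be : V2Nat F F') (ga rh : V2Nat G G')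
          (de ep : V2Nat H H') (mu : V2Mod al be) (nu : V2Mod ga rh) (xi : V2Mod de ep),
      JMeq (hcomp3 (hcomp3 xi nu) mu) (hcomp3 xi (hcomp3 nu mu))) /\
  (forall (U W : V2Cat V) (F H : V2Fun U W) (al be : V2Nat F H) (mu : V2Mod al be),
      JMeq (hcomp3 (id3 (id2 (id1 W))) mu) (md mu) /\
      JMeq (hcomp3 mu (id3 (id2 (id1 U)))) (md mu)).

Definition V2Cat_strict_3category : Prop :=
  closure_laws /\ hom_2category_laws /\ composition_2functor_laws /\
  associativity_unit_laws.

End Laws.

(* Every law of the 3-category is an equation between morphisms of V, and all
   of them follow from two compositions of cells x : Z -> W(f, f'): the
   vertical composite  vcmp x y = M ∘ (x ⊗1 y)  in a hom V-category and the
   horizontal composite  hcmp x y = ℳ ∘ (x ⊗2 y)  in a V-2-category.  Vertical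
   composition is associative and unital because each W(A, B) is a
   V-category, horizontal composition because ℳ is associative and unital as a
   V-functor, and the two satisfy the interchange law, which is the
   V-functoriality of ℳ together with naturality of eta.

   Naturality of a V-2-natural transformation th says  j_(th A') ∘h Tf =
   Sf ∘h j_(th A)  on homs, and naturality of a modification mu is the same
   equation with mu in place of j; closure of every operation follows by
   sliding cells along hcmp-composites with these equations.  A V-functor out
   of the unit V-category is determined by its object, so equations between
   2-cells reduce to equations between objects, and equations between 3-cells
   reduce, by the interchange law, to hcmp-composites of components.

   Since I is a strict unit, morphisms to be compared often have (co)domains
   that agree only propositionally (I ⊗ X = X); they are compared as elements
   of the type of all arrows. *)
From Stdlib Require Import JMeq FunctionalExtensionality Setoid.
Set Implicit Arguments.
Unset Strict Implicit.

Section Arrows.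
Variable C : Cat.

Definition Arrow : Type := {A : Ob C & {B : Ob C & Hom A B}}.
Definition arr {A B : C} (f : Hom A B) : Arrow := existT _ A (existT _ B f).

Lemma arr_rect {A B : C} (f : Hom A B) (P : forall A' B' : C, Hom A' B' -> Prop) :
  P A B f -> forall A' B' (f' : Hom A' B'), arr f = arr f' -> P A' B' f'.
Proof.
  intros H A' B' f' E.
  pose (Q := fun x : Arrow => P (projT1 x) (projT1 (projT2 x)) (projT2 (projT2 x))).
  change (Q (arr f')). rewrite <- E. exact H.
Qed.

Lemma arr_src {A B A' B' : C} (f : Hom A B) (f' : Hom A' B') : arr f = arr f' -> A = A'.
Proof. intro E. exact (f_equal (@projT1 _ _) E). Qed.

Lemma arr_tgt {A B A' B' : C} (f : Hom A B) (f' : Hom A' B') : arr f = arr f' -> B = B'.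
Proof. intro E. exact (@arr_rect _ _ f (fun _ B' _ => B = B') eq_refl _ _ f' E). Qed.

Lemma arr_JMeq {A B A' B' : C} (f : Hom A B) (f' : Hom A' B') : arr f = arr f' -> JMeq f f'.
Proof. intro E. exact (@arr_rect _ _ f (fun _ _ f' => JMeq f f') JMeq_refl _ _ f' E). Qed.

Lemma arr_inj {A B : C} (f f' : Hom A B) : arr f = arr f' -> f = f'.
Proof. intro E. apply JMeq_eq, arr_JMeq, E. Qed.

Lemma JMeq_arr {A B A' B' : C} (f : Hom A B) (f' : Hom A' B') :
  A = A' -> B = B' -> JMeq f f' -> arr f = arr f'.
Proof. intros e1 e2 E. destruct e1, e2. rewrite (JMeq_eq E). reflexivity. Qed.

Lemma arr_cmp {A B D A' B' D' : C} (f : Hom A B) (g : Hom B D) (f' : Hom A' B')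
  (g' : Hom B' D') :
  arr f = arr f' -> arr g = arr g' -> arr (g ∘ f) = arr (g' ∘ f').
Proof.
  intros E1 E2.
  pose proof (arr_src E1). pose proof (arr_tgt E1). pose proof (arr_tgt E2). subst.
  apply arr_inj in E1. apply arr_inj in E2. subst. reflexivity.
Qed.

Lemma arr_tm (T : Bifun C) {A A' B B' A1 A1' B1 B1' : C}
  (f : Hom A A') (g : Hom B B') (f1 : Hom A1 A1') (g1 : Hom B1 B1') :
  arr f = arr f1 -> arr g = arr g1 -> arr (tm T f g) = arr (tm T f1 g1).
Proof.
  intros E1 E2.
  pose proof (arr_src E1). pose proof (arr_tgt E1).
  pose proof (arr_src E2). pose proof (arr_tgt E2). subst.
  apply arr_inj in E1. apply arr_inj in E2. subst. reflexivity.
Qed.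

Lemma arr_idm {A B : C} : A = B -> arr (idm A) = arr (idm B).
Proof. intros e; destruct e; reflexivity. Qed.

Lemma arr_castm {A B : C} (e : A = B) : arr (castm e) = arr (idm A).
Proof. destruct e. reflexivity. Qed.

Lemma arr_cmp_idl {A B : C} (g : Hom A B) : arr (idm B ∘ g) = arr g.
Proof. rewrite cmp_idl; reflexivity. Qed.

Lemma arr_cmp_idr {A B : C} (g : Hom A B) : arr (g ∘ idm A) = arr g.
Proof. rewrite cmp_idr; reflexivity. Qed.

Lemma arr_cmp_trivr {X Y Z : C} (h : Hom X Y) (e : Hom Z X) :
  arr e = arr (idm X) -> arr (h ∘ e) = arr h.
Proof. intros E. rewrite <- (arr_cmp_idr h). apply arr_cmp; [exact E|reflexivity]. Qed.

Lemma arr_cmp_castr {A B D : C} (e : A = B) (g : Hom B D) : arr (g ∘ castm e) = arr g.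
Proof. destruct e. apply arr_cmp_idr. Qed.

Lemma arr_cmp_id {A B D X : C} (f : Hom A B) (g : Hom B D) :
  arr f = arr (idm X) -> arr g = arr (idm X) -> arr (g ∘ f) = arr (idm X).
Proof. intros. rewrite <- (arr_cmp_idl (idm X)). apply arr_cmp; assumption. Qed.

Lemma arr_tm_id (T : Bifun C) {A A' B B' X Y : C} (f : Hom A A') (g : Hom B B') :
  arr f = arr (idm X) -> arr g = arr (idm Y) -> arr (tm T f g) = arr (idm (tob T X Y)).
Proof. intros. rewrite <- tm_id. apply arr_tm; assumption. Qed.
End Arrows.
Arguments arr {C A B} f.

Section UnitCoherence.
Variable V : TwoFold.
Notation I := (Iu V).

Lemma arr_tm_unitl (T : Bifun V) (m : MonStr T I) {A B : V} (f : Hom A B) :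
  arr (tm T (idm I) f) = arr f.
Proof. apply JMeq_arr; [apply (unit_l m)|apply (unit_l m)|apply (unit_lm m)]. Qed.

Lemma arr_tm_unitr (T : Bifun V) (m : MonStr T I) {A B : V} (f : Hom A B) :
  arr (tm T f (idm I)) = arr f.
Proof. apply JMeq_arr; [apply (unit_r m)|apply (unit_r m)|apply (unit_rm m)]. Qed.

Lemma arr_alpha_unit1 (T : Bifun V) (m : MonStr T I) (B D : V) :
  arr (alpha m I B D) = arr (idm (tob T B D)).
Proof.
  apply JMeq_arr; [| |apply (alpha_unit1 m)]; rewrite (unit_l m); reflexivity.
Qed.

Lemma arr_alpha_unit2 (T : Bifun V) (m : MonStr T I) (A D : V) :
  arr (alpha m A I D) = arr (idm (tob T A D)).
Proof.
  apply JMeq_arr; [rewrite (unit_r m)|rewrite (unit_l m)|apply (alpha_unit2 m)]; reflexivity.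
Qed.

Lemma arr_alpha_unit3 (T : Bifun V) (m : MonStr T I) (A B : V) :
  arr (alpha m A B I) = arr (idm (tob T A B)).
Proof.
  apply JMeq_arr; [| |apply (alpha_unit3 m)]; rewrite (unit_r m); reflexivity.
Qed.

Lemma arr_eta_unit (A B : V) : arr (eta A B I I) = arr (idm (tob (T2 V) A B)).
Proof.
  apply JMeq_arr; [| |apply eta_u1].
  - rewrite (unit_l (mon2 V)), (unit_r (mon1 V)); reflexivity.
  - rewrite !(unit_r (mon1 V)); reflexivity.
Qed.
End UnitCoherence.

Ltac unit_ob := repeat first [ rewrite (unit_l (mon1 _)) | rewrite (unit_r (mon1 _))
   | rewrite (unit_l (mon2 _)) | rewrite (unit_r (mon2 _)) ]; reflexivity.

(* Proves [arr c = arr (idm X)] when [c] is built by composition and tensoring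
   from identities, casts, and associators or interchangers at the unit. *)
Ltac arr_trivial :=
  lazymatch goal with
  | |- arr (_ ∘ _) = arr (idm _) => apply arr_cmp_id; arr_trivial
  | |- arr (tm _ _ _) = arr (idm _) =>
      etransitivity; [apply arr_tm_id; arr_trivial | apply arr_idm; unit_ob]
  | |- arr (castm _) = arr (idm _) => etransitivity; [apply arr_castm | apply arr_idm; unit_ob]
  | |- arr (eta _ _ _ _) = arr (idm _) =>
      etransitivity; [apply arr_eta_unit | apply arr_idm; unit_ob]
  | |- arr (alpha _ _ _ _) = arr (idm _) =>
      etransitivity;
      [first [apply arr_alpha_unit1 | apply arr_alpha_unit2 | apply arr_alpha_unit3]
      | apply arr_idm; unit_ob]
  | |- arr (idm _) = arr (idm _) => apply arr_idm; unit_ob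
  end.

Section VFunctors.
Variable V : TwoFold.

Lemma vfun_ext {A B : VCatD V} (F G : VFunD A B) :
  (forall a, fob F a = fob G a) -> (forall a b, arr (fhom F a b) = arr (fhom G a b)) -> F = G.
Proof.
  destruct F as [fo fh], G as [go gh]; simpl; intros Ho Hh.
  assert (fo = go) by (apply functional_extensionality; exact Ho). subst go.
  f_equal. apply functional_extensionality_dep; intro a.
  apply functional_extensionality_dep; intro b. apply arr_inj, Hh.
Qed.

Lemma vfun_eq_fob {A B : VCatD V} {F G : VFunD A B} :
  F = G -> forall a, fob F a = fob G a.
Proof. intros E; subst; reflexivity. Qed.

Lemma vfun_eq_fhom {A B : VCatD V} {F G : VFunD A B} :
  F = G -> forall a b, arr (fhom F a b) = arr (fhom G a b).
Proof. intros E; subst; reflexivity. Qed.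

Lemma fhom_congr {A B : VCatD V} (F : VFunD A B) (a b a' b' : vob A) :
  a = a' -> b = b' -> arr (fhom F a b) = arr (fhom F a' b').
Proof. intros; subst; reflexivity. Qed.

Lemma vfcomp_assoc {A B C D : VCatD V} (h : VFunD C D) (g : VFunD B C) (f : VFunD A B) :
  vfcomp (vfcomp h g) f = vfcomp h (vfcomp g f).
Proof. apply vfun_ext; intros; simpl; [reflexivity|]. rewrite cmp_assoc; reflexivity. Qed.

Lemma vfcomp_idl {A B : VCatD V} (f : VFunD A B) : vfcomp (vfid B) f = f.
Proof. apply vfun_ext; intros; simpl; [reflexivity|]. rewrite cmp_idl; reflexivity. Qed.

Lemma vfcomp_idr {A B : VCatD V} (f : VFunD A B) : vfcomp f (vfid A) = f.
Proof. apply vfun_ext; intros; simpl; [reflexivity|]. rewrite cmp_idr; reflexivity. Qed.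

Lemma vftens_comp {A B C A' B' C' : VCatD V} (a : VFunD B C) (b : VFunD A B)
  (c : VFunD B' C') (d : VFunD A' B') :
  vftens (vfcomp a b) (vfcomp c d) = vfcomp (vftens a c) (vftens b d).
Proof. apply vfun_ext; intros; simpl; [reflexivity|]. rewrite tm_cmp; reflexivity. Qed.

Lemma vftens_id {A B : VCatD V} : vftens (vfid A) (vfid B) = vfid (tensVC A B).
Proof. apply vfun_ext; [intros []; reflexivity|]. intros; simpl. rewrite tm_id; reflexivity. Qed.

Lemma is_VFun_comp {A B C : VCatD V} (G : VFunD B C) (F : VFunD A B) :
  is_VFun G -> is_VFun F -> is_VFun (vfcomp G F).
Proof.
  intros [G1 G2] [F1 F2]; split; simpl; intros.
  - rewrite <- cmp_assoc, F1, cmp_assoc, G1, <- cmp_assoc, <- tm_cmp. reflexivity.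
  - rewrite <- cmp_assoc, F2, G2. reflexivity.
Qed.

Lemma is_VFun_tens {A B A' B' : VCatD V} (F : VFunD A A') (G : VFunD B B') :
  is_VFun F -> is_VFun G -> is_VFun (vftens F G).
Proof.
  intros [F1 F2] [G1 G2]; split; simpl; intros.
  - rewrite cmp_assoc, <- tm_cmp, F1, G1, tm_cmp, <- !cmp_assoc, <- eta_nat. reflexivity.
  - rewrite cmp_assoc, <- tm_cmp, F2, G2. reflexivity.
Qed.

Lemma is_VFun_id (A : VCatD V) : is_VFun (vfid A).
Proof. split; simpl; intros; [rewrite cmp_idl, tm_id, cmp_idr; reflexivity|apply cmp_idl]. Qed.

Lemma is_VFun_lunit_inv_unit : is_VFun (lunit_inv (@unitVC V)).
Proof.
  split; simpl; intros;
    (apply arr_inj; transitivity (arr (idm (Iu V))); [arr_trivial | symmetry; arr_trivial]).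
Qed.

Lemma unit_vfun_fhom {X : VCatD V} (F : VFunD unitVC X) :
  is_VFun F -> fhom F tt tt = vj X (pt F).
Proof. intros [_ H]. specialize (H tt). simpl in H. rewrite cmp_idr in H. exact H. Qed.

Lemma arr_vj (X : VCatD V) (a b : vob X) : a = b -> arr (vj X a) = arr (vj X b).
Proof. intros e; destruct e; reflexivity. Qed.

Lemma unit_vfun_ext {X : VCatD V} (F G : VFunD unitVC X) :
  is_VFun F -> is_VFun G -> pt F = pt G -> F = G.
Proof.
  intros HF HG Hp. apply vfun_ext.
  - intros []; exact Hp.
  - intros [] []. rewrite (unit_vfun_fhom HF), (unit_vfun_fhom HG). apply arr_vj, Hp.
Qed.
End VFunctors.

Section Composites.
Variable V : TwoFold.
Notation I := (Iu V).
Notation T1 := (T1 V).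
Notation T2 := (T2 V).

Definition vcmp {X : VCatD V} {a b c : vob X} {Z1 Z2 : V}
  (x : Hom Z1 (vhom X b c)) (y : Hom Z2 (vhom X a b)) : Hom (tob T1 Z1 Z2) (vhom X a c) :=
  vM X a b c ∘ tm T1 x y.

Definition hcmp {W : V2CatD V} {A B C : c0 W} {f f' : vob (chom W B C)}
  {g g' : vob (chom W A B)} {Z1 Z2 : V}
  (x : Hom Z1 (vhom (chom W B C) f f')) (y : Hom Z2 (vhom (chom W A B) g g'))
  : Hom (tob T2 Z1 Z2) (vhom (chom W A C) (fob (cM W A B C) (f,g)) (fob (cM W A B C) (f',g'))) :=
  fhom (cM W A B C) (f,g) (f',g') ∘ tm T2 x y.

Definition one (W : V2CatD V) (A : c0 W) : vob (chom W A A) := fob (cJ W A) tt.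
Arguments one : clear implicits.

Lemma vcmp_congr {X : VCatD V} {a b c a1 b1 c1 : vob X} {Z1 Z2 Z1' Z2' : V}
  (x : Hom Z1 (vhom X b c)) (y : Hom Z2 (vhom X a b))
  (x' : Hom Z1' (vhom X b1 c1)) (y' : Hom Z2' (vhom X a1 b1)) :
  a = a1 -> b = b1 -> c = c1 -> arr x = arr x' -> arr y = arr y' ->
  arr (vcmp x y) = arr (vcmp x' y').
Proof. intros; subst. apply arr_cmp; [apply arr_tm; auto|reflexivity]. Qed.

Lemma hcmp_congr {W : V2CatD V} {A B C : c0 W} {f f' f1 f1' : vob (chom W B C)}
  {g g' g1 g1' : vob (chom W A B)} {Z1 Z2 Z1' Z2' : V}
  (x : Hom Z1 (vhom (chom W B C) f f')) (y : Hom Z2 (vhom (chom W A B) g g'))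
  (x' : Hom Z1' (vhom (chom W B C) f1 f1')) (y' : Hom Z2' (vhom (chom W A B) g1 g1')) :
  f = f1 -> f' = f1' -> g = g1 -> g' = g1' -> arr x = arr x' -> arr y = arr y' ->
  arr (hcmp x y) = arr (hcmp x' y').
Proof. intros; subst. apply arr_cmp; [apply arr_tm; auto|reflexivity]. Qed.

Lemma vcmp_cmpl {X : VCatD V} {a b c : vob X} {Z1 Z2 Z3 : V}
  (x : Hom Z1 (vhom X b c)) (y : Hom Z2 (vhom X a b)) (e : Hom Z3 Z1) :
  vcmp (x ∘ e) y = vcmp x y ∘ tm T1 e (idm Z2).
Proof. unfold vcmp. rewrite <- cmp_assoc. f_equal. rewrite <- (cmp_idr y) at 1. apply tm_cmp. Qed.

Lemma vcmp_cmpr {X : VCatD V} {a b c : vob X} {Z1 Z2 Z3 : V}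
  (x : Hom Z1 (vhom X b c)) (y : Hom Z2 (vhom X a b)) (e : Hom Z3 Z2) :
  vcmp x (y ∘ e) = vcmp x y ∘ tm T1 (idm Z1) e.
Proof. unfold vcmp. rewrite <- cmp_assoc. f_equal. rewrite <- (cmp_idr x) at 1. apply tm_cmp. Qed.

Lemma hcmp_cmpl {W : V2CatD V} {A B C : c0 W} {f f' : vob (chom W B C)}
  {g g' : vob (chom W A B)} {Z1 Z2 Z3 : V}
  (x : Hom Z1 (vhom (chom W B C) f f')) (y : Hom Z2 (vhom (chom W A B) g g')) (e : Hom Z3 Z1) :
  hcmp (x ∘ e) y = hcmp x y ∘ tm T2 e (idm Z2).
Proof. unfold hcmp. rewrite <- cmp_assoc. f_equal. rewrite <- (cmp_idr y) at 1. apply tm_cmp. Qed.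

Lemma hcmp_cmpr {W : V2CatD V} {A B C : c0 W} {f f' : vob (chom W B C)}
  {g g' : vob (chom W A B)} {Z1 Z2 Z3 : V}
  (x : Hom Z1 (vhom (chom W B C) f f')) (y : Hom Z2 (vhom (chom W A B) g g')) (e : Hom Z3 Z2) :
  hcmp x (y ∘ e) = hcmp x y ∘ tm T2 (idm Z1) e.
Proof. unfold hcmp. rewrite <- cmp_assoc. f_equal. rewrite <- (cmp_idr x) at 1. apply tm_cmp. Qed.

Lemma arr_vcmp_castl {X : VCatD V} {a b c : vob X} {Z1 Z2 Z3 : V}
  (x : Hom Z1 (vhom X b c)) (y : Hom Z2 (vhom X a b)) (e : Z3 = Z1) :
  arr (vcmp (x ∘ castm e) y) = arr (vcmp x y).
Proof. rewrite vcmp_cmpl. destruct e. simpl. rewrite tm_id. apply arr_cmp_idr. Qed.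

Lemma arr_vcmp_castr {X : VCatD V} {a b c : vob X} {Z1 Z2 Z3 : V}
  (x : Hom Z1 (vhom X b c)) (y : Hom Z2 (vhom X a b)) (e : Z3 = Z2) :
  arr (vcmp x (y ∘ castm e)) = arr (vcmp x y).
Proof. rewrite vcmp_cmpr. destruct e. simpl. rewrite tm_id. apply arr_cmp_idr. Qed.

Lemma arr_hcmp_castl {W : V2CatD V} {A B C : c0 W} {f f' : vob (chom W B C)}
  {g g' : vob (chom W A B)} {Z1 Z2 Z3 : V}
  (x : Hom Z1 (vhom (chom W B C) f f')) (y : Hom Z2 (vhom (chom W A B) g g')) (e : Z3 = Z1) :
  arr (hcmp (x ∘ castm e) y) = arr (hcmp x y).
Proof. rewrite hcmp_cmpl. destruct e. simpl. rewrite tm_id. apply arr_cmp_idr. Qed.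

Lemma arr_hcmp_castr {W : V2CatD V} {A B C : c0 W} {f f' : vob (chom W B C)}
  {g g' : vob (chom W A B)} {Z1 Z2 Z3 : V}
  (x : Hom Z1 (vhom (chom W B C) f f')) (y : Hom Z2 (vhom (chom W A B) g g')) (e : Z3 = Z2) :
  arr (hcmp x (y ∘ castm e)) = arr (hcmp x y).
Proof. rewrite hcmp_cmpr. destruct e. simpl. rewrite tm_id. apply arr_cmp_idr. Qed.

Section VCategory.
Variable X : VCatD V.
Hypothesis HX : is_VCat X.

Lemma vcmp_assoc {a b c d : vob X} {Z1 Z2 Z3 : V} (x : Hom Z1 (vhom X c d))
  (y : Hom Z2 (vhom X b c)) (z : Hom Z3 (vhom X a b)) :
  vcmp (vcmp x y) z = vcmp x (vcmp y z) ∘ alpha (mon1 V) _ _ _.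
Proof.
  unfold vcmp. destruct HX as [HM _].
  rewrite <- (cmp_idl z) at 1. rewrite tm_cmp, cmp_assoc, HM.
  rewrite <- (cmp_idl x) at 2. rewrite tm_cmp.
  rewrite <- !cmp_assoc. f_equal. f_equal. rewrite alpha_nat. reflexivity.
Qed.

Lemma vcmp_idl {a b : vob X} {Z : V} (x : Hom Z (vhom X a b)) : arr (vcmp (vj X b) x) = arr x.
Proof.
  unfold vcmp. destruct HX as [_ [Hj _]].
  rewrite <- (cmp_idl x) at 1. rewrite <- (cmp_idr (vj X b)). rewrite tm_cmp, cmp_assoc.
  rewrite <- (arr_cmp_idl x). apply arr_cmp; [apply (arr_tm_unitl (mon1 V))|].
  apply JMeq_arr; [apply (unit_l (mon1 V))|reflexivity|apply Hj].
Qed.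

Lemma vcmp_idr {a b : vob X} {Z : V} (x : Hom Z (vhom X a b)) : arr (vcmp x (vj X a)) = arr x.
Proof.
  unfold vcmp. destruct HX as [_ [_ Hj]].
  rewrite <- (cmp_idl x) at 1. rewrite <- (cmp_idr (vj X a)). rewrite tm_cmp, cmp_assoc.
  rewrite <- (arr_cmp_idl x). apply arr_cmp; [apply (arr_tm_unitr (mon1 V))|].
  apply JMeq_arr; [apply (unit_r (mon1 V))|reflexivity|apply Hj].
Qed.
End VCategory.

Lemma fhom_vcmp {A B : VCatD V} (F : VFunD A B) (HF : is_VFun F) {a b c : vob A} {Z1 Z2 : V}
  (x : Hom Z1 (vhom A b c)) (y : Hom Z2 (vhom A a b)) :
  fhom F a c ∘ vcmp x y = vcmp (fhom F b c ∘ x) (fhom F a b ∘ y).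
Proof. unfold vcmp. destruct HF as [HM _]. rewrite cmp_assoc, HM, tm_cmp, cmp_assoc. reflexivity. Qed.

Lemma fhom_vj {A B : VCatD V} (F : VFunD A B) (HF : is_VFun F) (a : vob A) :
  fhom F a a ∘ vj A a = vj B (fob F a).
Proof. apply (proj2 HF). Qed.

Section V2Category.
Variable W : V2CatD V.
Hypothesis HW : is_V2Cat W.

Lemma V2Cat_hom_VCat A B : is_VCat (chom W A B).
Proof. apply HW. Qed.

Lemma V2Cat_cM_VFun A B C : is_VFun (cM W A B C).
Proof. apply HW. Qed.

Lemma V2Cat_cJ_VFun A : is_VFun (cJ W A).
Proof. apply HW. Qed.

Lemma hcmp_vcmp {A B C : c0 W} {f f' f'' : vob (chom W B C)} {g g' g'' : vob (chom W A B)}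
  {Z1 Z2 Z3 Z4 : V}
  (x' : Hom Z1 (vhom (chom W B C) f' f'')) (x : Hom Z2 (vhom (chom W B C) f f'))
  (y' : Hom Z3 (vhom (chom W A B) g' g'')) (y : Hom Z4 (vhom (chom W A B) g g')) :
  hcmp (vcmp x' x) (vcmp y' y) ∘ eta Z1 Z3 Z2 Z4 = vcmp (hcmp x' y') (hcmp x y).
Proof.
  unfold hcmp, vcmp. rewrite !tm_cmp, <- !cmp_assoc, <- eta_nat, !cmp_assoc. f_equal.
  pose proof (proj1 (V2Cat_cM_VFun A B C) (f,g) (f',g') (f'',g'')) as HM. simpl in HM.
  rewrite cmp_assoc in HM. exact HM.
Qed.

(* For [x], [y] out of [I] the interchanger [eta Z1 Z3 I I] is an identity. *)
Lemma hcmp_interchange {A B C : c0 W} {f f' f'' : vob (chom W B C)}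
  {g g' g'' : vob (chom W A B)} {Z1 Z3 : V}
  (x' : Hom Z1 (vhom (chom W B C) f' f'')) (x : Hom I (vhom (chom W B C) f f'))
  (y' : Hom Z3 (vhom (chom W A B) g' g'')) (y : Hom I (vhom (chom W A B) g g')) :
  arr (hcmp (vcmp x' x) (vcmp y' y)) = arr (vcmp (hcmp x' y') (hcmp x y)).
Proof. rewrite <- hcmp_vcmp. symmetry. apply arr_cmp_trivr. arr_trivial. Qed.

Lemma hcmp_vj {A B C : c0 W} (f : vob (chom W B C)) (g : vob (chom W A B)) :
  arr (hcmp (vj _ f) (vj _ g)) = arr (vj _ (fob (cM W A B C) (f,g))).
Proof.
  pose proof (proj2 (V2Cat_cM_VFun A B C) (f,g)) as Hj. simpl in Hj. rewrite <- Hj.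
  unfold hcmp. rewrite cmp_assoc. symmetry. apply arr_cmp_castr.
Qed.

Lemma V2Cat_cM_assoc A B C D :
  vfcomp (cM W A B D) (vftens (cM W B C D) (vfid (chom W A B)))
  = vfcomp (vfcomp (cM W A C D) (vftens (vfid (chom W C D)) (cM W A B C))) (vfassoc _ _ _).
Proof. apply HW. Qed.

Lemma cM_assoc {A B C D : c0 W} (f : vob (chom W C D)) (g : vob (chom W B C))
  (h : vob (chom W A B)) :
  fob (cM W A B D) (fob (cM W B C D) (f,g), h) = fob (cM W A C D) (f, fob (cM W A B C) (g,h)).
Proof. exact (vfun_eq_fob (V2Cat_cM_assoc A B C D) ((f,g),h)). Qed.

Lemma hcmp_assoc {A B C D : c0 W} {f f' : vob (chom W C D)} {g g' : vob (chom W B C)}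
  {h h' : vob (chom W A B)} {Z1 Z2 Z3 : V}
  (x : Hom Z1 (vhom (chom W C D) f f')) (y : Hom Z2 (vhom (chom W B C) g g'))
  (z : Hom Z3 (vhom (chom W A B) h h')) :
  arr (hcmp (hcmp x y) z) = arr (hcmp x (hcmp y z) ∘ alpha (mon2 V) _ _ _).
Proof.
  pose proof (vfun_eq_fhom (V2Cat_cM_assoc A B C D) ((f,g),h) ((f',g'),h')) as HM. simpl in HM.
  unfold hcmp.
  rewrite <- (cmp_idl z) at 1. rewrite tm_cmp, cmp_assoc.
  rewrite <- (cmp_idl x) at 2. rewrite tm_cmp, <- !cmp_assoc.
  match goal with |- _ = arr (?a ∘ (?b ∘ (?c ∘ ?d))) =>
    transitivity (arr ((a ∘ b ∘ alpha (mon2 V) _ _ _) ∘ tm T2 (tm T2 x y) z)) end.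
  - rewrite !cmp_assoc. apply arr_cmp; [reflexivity|exact HM].
  - f_equal. rewrite <- !cmp_assoc, alpha_nat. reflexivity.
Qed.

Lemma hcmp_assoc_I1 {A B C D : c0 W} {f f' : vob (chom W C D)} {g g' : vob (chom W B C)}
  {h h' : vob (chom W A B)} {Z2 Z3 : V}
  (x : Hom I (vhom (chom W C D) f f')) (y : Hom Z2 (vhom (chom W B C) g g'))
  (z : Hom Z3 (vhom (chom W A B) h h')) :
  arr (hcmp (hcmp x y) z) = arr (hcmp x (hcmp y z)).
Proof. rewrite hcmp_assoc. apply arr_cmp_trivr. arr_trivial. Qed.

Lemma hcmp_assoc_I2 {A B C D : c0 W} {f f' : vob (chom W C D)} {g g' : vob (chom W B C)}
  {h h' : vob (chom W A B)} {Z1 Z3 : V}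
  (x : Hom Z1 (vhom (chom W C D) f f')) (y : Hom I (vhom (chom W B C) g g'))
  (z : Hom Z3 (vhom (chom W A B) h h')) :
  arr (hcmp (hcmp x y) z) = arr (hcmp x (hcmp y z)).
Proof. rewrite hcmp_assoc. apply arr_cmp_trivr. arr_trivial. Qed.

Lemma hcmp_assoc_I3 {A B C D : c0 W} {f f' : vob (chom W C D)} {g g' : vob (chom W B C)}
  {h h' : vob (chom W A B)} {Z1 Z2 : V}
  (x : Hom Z1 (vhom (chom W C D) f f')) (y : Hom Z2 (vhom (chom W B C) g g'))
  (z : Hom I (vhom (chom W A B) h h')) :
  arr (hcmp (hcmp x y) z) = arr (hcmp x (hcmp y z)).
Proof. rewrite hcmp_assoc. apply arr_cmp_trivr. arr_trivial. Qed.

Lemma V2Cat_cM_unitl A B :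
  vfcomp (vfcomp (cM W A B B) (vftens (cJ W B) (vfid (chom W A B)))) (lunit_inv _)
  = vfid (chom W A B).
Proof. apply HW. Qed.

Lemma V2Cat_cM_unitr A B :
  vfcomp (vfcomp (cM W A A B) (vftens (vfid (chom W A B)) (cJ W A))) (runit_inv _)
  = vfid (chom W A B).
Proof. apply HW. Qed.

Lemma cM_onel {A B : c0 W} (g : vob (chom W A B)) : fob (cM W A B B) (one W B, g) = g.
Proof. exact (vfun_eq_fob (V2Cat_cM_unitl A B) g). Qed.

Lemma cM_oner {A B : c0 W} (g : vob (chom W A B)) : fob (cM W A A B) (g, one W A) = g.
Proof. exact (vfun_eq_fob (V2Cat_cM_unitr A B) g). Qed.

Lemma hcmp_onel {A B : c0 W} {g g' : vob (chom W A B)} {Z : V}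
  (y : Hom Z (vhom (chom W A B) g g')) : arr (hcmp (vj _ (one W B)) y) = arr y.
Proof.
  pose proof (vfun_eq_fhom (V2Cat_cM_unitl A B) g g') as HM. simpl in HM.
  rewrite arr_cmp_castr, (unit_vfun_fhom (V2Cat_cJ_VFun B)) in HM.
  unfold hcmp. rewrite <- (cmp_idl y) at 1. rewrite <- (cmp_idr (vj _ (one W B))).
  rewrite tm_cmp, cmp_assoc, <- (arr_cmp_idl y).
  apply arr_cmp; [apply (arr_tm_unitl (mon2 V))|exact HM].
Qed.

Lemma hcmp_oner {A B : c0 W} {g g' : vob (chom W A B)} {Z : V}
  (y : Hom Z (vhom (chom W A B) g g')) : arr (hcmp y (vj _ (one W A))) = arr y.
Proof.
  pose proof (vfun_eq_fhom (V2Cat_cM_unitr A B) g g') as HM. simpl in HM.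
  rewrite arr_cmp_castr, (unit_vfun_fhom (V2Cat_cJ_VFun A)) in HM.
  unfold hcmp. rewrite <- (cmp_idl y) at 1. rewrite <- (cmp_idr (vj _ (one W A))).
  rewrite tm_cmp, cmp_assoc, <- (arr_cmp_idl y).
  apply arr_cmp; [apply (arr_tm_unitr (mon2 V))|exact HM].
Qed.
End V2Category.

Section V2Functor.
Variables U W : V2CatD V.
Variable T : V2FunD U W.
Hypothesis HT : is_V2Fun T.

Lemma V2Fun_F1_VFun A B : is_VFun (F1 T A B).
Proof. apply HT. Qed.

Lemma V2Fun_cM A B C :
  vfcomp (F1 T A C) (cM U A B C) = vfcomp (cM W _ _ _) (vftens (F1 T B C) (F1 T A B)).
Proof. apply HT. Qed.

Lemma F1_cM {A B C : c0 U} (f : vob (chom U B C)) (g : vob (chom U A B)) :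
  fob (F1 T A C) (fob (cM U A B C) (f,g))
  = fob (cM W _ _ _) (fob (F1 T B C) f, fob (F1 T A B) g).
Proof. exact (vfun_eq_fob (V2Fun_cM A B C) (f,g)). Qed.

Lemma F1_hcmp {A B C : c0 U} {f f' : vob (chom U B C)} {g g' : vob (chom U A B)} {Z1 Z2 : V}
  (x : Hom Z1 (vhom (chom U B C) f f')) (y : Hom Z2 (vhom (chom U A B) g g')) :
  arr (fhom (F1 T A C) _ _ ∘ hcmp x y)
  = arr (hcmp (fhom (F1 T B C) _ _ ∘ x) (fhom (F1 T A B) _ _ ∘ y)).
Proof.
  pose proof (vfun_eq_fhom (V2Fun_cM A B C) (f,g) (f',g')) as HM. simpl in HM.
  unfold hcmp. rewrite tm_cmp, !cmp_assoc. apply arr_cmp; [reflexivity|exact HM].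
Qed.

Lemma F1_one A : fob (F1 T A A) (one U A) = one W (F0 T A).
Proof. exact (vfun_eq_fob (proj2 (proj2 HT) A) tt). Qed.
End V2Functor.

Section Naturality.
Variables U W : V2CatD V.
Variables T S : V2FunD U W.

Definition natural_ob (th : V2NatD T S) : Prop :=
  forall A A' (f : vob (chom U A A')),
    fob (cM W _ _ _) (pt (th A'), fob (F1 T A A') f)
    = fob (cM W _ _ _) (fob (F1 S A A') f, pt (th A)).

(* For [mu := id3 th] this is the hom part of the naturality of [th]. *)
Definition mod_natural (th ph : V2NatD T S) (mu : V2ModD th ph) : Prop :=
  forall A A' (f g : vob (chom U A A')),
    arr (hcmp (mu A') (fhom (F1 T A A') f g)) = arr (hcmp (fhom (F1 S A A') f g) (mu A)).

Lemma V2Nat_intro (th : V2NatD T S) :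
  (forall A, is_VFun (th A)) -> natural_ob th -> mod_natural (id3 th) -> is_V2Nat th.
Proof.
  intros Hf Ho Hh. split; [exact Hf|]. intros A A'. apply vfun_ext.
  - intros f. apply Ho.
  - intros f g. simpl. rewrite !arr_cmp_castr, !(unit_vfun_fhom (Hf _)). apply Hh.
Qed.

Section Transformation.
Variable th : V2NatD T S.
Hypothesis Hth : is_V2Nat th.

Lemma V2Nat_VFun A : is_VFun (th A).
Proof. apply Hth. Qed.

Lemma V2Nat_natural_ob : natural_ob th.
Proof. intros A A' f. exact (vfun_eq_fob (proj2 Hth A A') f). Qed.

Lemma V2Nat_natural_hom : mod_natural (id3 th).
Proof.
  intros A A' f g. pose proof (vfun_eq_fhom (proj2 Hth A A') f g) as Hh. simpl in Hh.
  rewrite !arr_cmp_castr, !(unit_vfun_fhom (V2Nat_VFun _)) in Hh. exact Hh.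
Qed.
End Transformation.

Lemma V2Mod_intro (th ph : V2NatD T S) (mu : V2ModD th ph) : mod_natural mu -> is_V2Mod mu.
Proof. intros H A A' f g. apply arr_JMeq. rewrite !arr_cmp_castr. apply H. Qed.

Lemma V2Mod_natural (th ph : V2NatD T S) (mu : V2ModD th ph) :
  is_V2Nat th -> is_V2Nat ph -> is_V2Mod mu -> mod_natural mu.
Proof.
  intros Hth Hph H A A' f g. specialize (H A A' f g).
  apply JMeq_arr in H; [rewrite !arr_cmp_castr in H; exact H|reflexivity|].
  rewrite (V2Nat_natural_ob Hth), (V2Nat_natural_ob Hph). reflexivity.
Qed.

Lemma mod_natural_cmp (th ph : V2NatD T S) (mu : V2ModD th ph) (H : mod_natural mu)
  A A' (f g : vob (chom U A A')) (Z : V) (e : Hom Z (vhom (chom U A A') f g)) :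
  arr (hcmp (mu A') (fhom (F1 T A A') f g ∘ e)) = arr (hcmp (fhom (F1 S A A') f g ∘ e) (mu A)).
Proof.
  rewrite hcmp_cmpr, hcmp_cmpl. apply arr_cmp; [|apply H].
  rewrite (arr_tm_unitl (mon2 V)), (arr_tm_unitr (mon2 V)). reflexivity.
Qed.
End Naturality.
End Composites.
Arguments one {V} W A.

Section Closure.
Variable V : TwoFold.

Lemma is_V2Fun_comp1 (U V' W : V2CatD V) (S : V2FunD V' W) (T : V2FunD U V') :
  is_V2Fun S -> is_V2Fun T -> is_V2Fun (comp1 S T).
Proof.
  intros HS HT. split; [|split]; simpl; intros.
  - apply is_VFun_comp; [apply HS|apply HT].
  - rewrite vftens_comp, vfcomp_assoc, (V2Fun_cM HT), <- vfcomp_assoc, (V2Fun_cM HS),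
      vfcomp_assoc.
    reflexivity.
  - rewrite vfcomp_assoc, (proj2 (proj2 HT)), (proj2 (proj2 HS)). reflexivity.
Qed.

Lemma is_V2Fun_id1 (U : V2CatD V) : is_V2Fun (id1 U).
Proof.
  split; [|split]; simpl; intros.
  - apply is_VFun_id.
  - rewrite vftens_id, vfcomp_idl, vfcomp_idr. reflexivity.
  - apply vfcomp_idl.
Qed.

Section Vertical.
Variables U W : V2CatD V.
Hypothesis HW : is_V2Cat W.

Lemma is_VFun_bstar (T S R : V2FunD U W) (be : V2NatD S R) (ga : V2NatD T S) A :
  is_VFun (be A) -> is_VFun (ga A) -> is_VFun (bstar be ga A).
Proof.
  intros Hb Hg. apply is_VFun_comp; [apply is_VFun_comp|apply is_VFun_lunit_inv_unit].
  - apply (V2Cat_cM_VFun HW).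
  - apply is_VFun_tens; assumption.
Qed.

Lemma is_V2Nat_bstar (T S R : V2FunD U W) (be : V2NatD S R) (ga : V2NatD T S) :
  is_V2Nat be -> is_V2Nat ga -> is_V2Nat (bstar be ga).
Proof.
  intros Hb Hg. apply V2Nat_intro.
  - intros A. apply is_VFun_bstar; [apply Hb|apply Hg].
  - intros A A' f. unfold pt; simpl. fold (pt (be A')) (pt (ga A')) (pt (be A)) (pt (ga A)).
    rewrite (cM_assoc HW), (V2Nat_natural_ob Hg), <- (cM_assoc HW), (V2Nat_natural_ob Hb),
      (cM_assoc HW).
    reflexivity.
  - intros A A' f g. unfold id3, pt; simpl. fold (pt (be A')) (pt (ga A')) (pt (be A)) (pt (ga A)).
    transitivity (arr (hcmp (hcmp (vj _ (pt (be A'))) (vj _ (pt (ga A')))) (fhom (F1 T A A') f g))).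
    { apply hcmp_congr; try reflexivity. symmetry; apply (hcmp_vj HW). }
    rewrite (hcmp_assoc_I1 HW).
    transitivity (arr (hcmp (vj _ (pt (be A'))) (hcmp (fhom (F1 S A A') f g) (vj _ (pt (ga A)))))).
    { apply hcmp_congr; try reflexivity; try apply (V2Nat_natural_ob Hg).
      apply (V2Nat_natural_hom Hg). }
    rewrite <- (hcmp_assoc_I1 HW).
    transitivity (arr (hcmp (hcmp (fhom (F1 R A A') f g) (vj _ (pt (be A)))) (vj _ (pt (ga A))))).
    { apply hcmp_congr; try reflexivity; try apply (V2Nat_natural_ob Hb).
      apply (V2Nat_natural_hom Hb). }
    rewrite (hcmp_assoc_I3 HW).
    apply hcmp_congr; try reflexivity. apply (hcmp_vj HW).
Qed.

Lemma is_V2Nat_id2 (T : V2FunD U W) : is_V2Nat (id2 T).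
Proof.
  apply V2Nat_intro.
  - intros A. apply (V2Cat_cJ_VFun HW).
  - intros A A' f. unfold pt, id2. fold (one W (F0 T A')) (one W (F0 T A)).
    rewrite (cM_onel HW), (cM_oner HW). reflexivity.
  - intros A A' f g. unfold id3, pt, id2. fold (one W (F0 T A')) (one W (F0 T A)).
    rewrite (hcmp_onel HW), (hcmp_oner HW). reflexivity.
Qed.
End Vertical.

Lemma is_V2Nat_whiskL2 (U V' W : V2CatD V) (G : V2FunD V' W) (F H : V2FunD U V')
  (al : V2NatD F H) :
  is_V2Fun G -> is_V2Nat al -> is_V2Nat (whiskL2 G al).
Proof.
  intros HG Hal. apply V2Nat_intro.
  - intros A. apply is_VFun_comp; [apply HG|apply Hal].
  - intros A A' f. unfold pt, whiskL2; simpl. fold (pt (al A')) (pt (al A)).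
    rewrite <- !(F1_cM HG). f_equal. apply (V2Nat_natural_ob Hal).
  - intros A A' f g. unfold id3, pt, whiskL2; simpl. fold (pt (al A')) (pt (al A)).
    rewrite <- !(fhom_vj (V2Fun_F1_VFun HG _ _)), <- !(F1_hcmp HG).
    apply arr_cmp; [apply (V2Nat_natural_hom Hal)|].
    apply fhom_congr; apply (V2Nat_natural_ob Hal).
Qed.

Lemma is_V2Nat_whiskR2 (U V' W : V2CatD V) (G K : V2FunD V' W) (ga : V2NatD G K)
  (H : V2FunD U V') :
  is_V2Nat ga -> is_V2Nat (whiskR2 ga H).
Proof.
  intros Hg. apply V2Nat_intro.
  - intros A. apply Hg.
  - intros A A' f. apply (V2Nat_natural_ob Hg).
  - intros A A' f g. apply (mod_natural_cmp (V2Nat_natural_hom Hg)).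
Qed.

Lemma is_V2Nat_hcomp2 (U V' W : V2CatD V) (HW : is_V2Cat W) (F H : V2FunD U V')
  (G K : V2FunD V' W) (ga : V2NatD G K) (al : V2NatD F H) :
  is_V2Fun G -> is_V2Nat ga -> is_V2Nat al -> is_V2Nat (hcomp2 ga al).
Proof.
  intros HG Hg Hal. apply (is_V2Nat_bstar HW).
  - apply is_V2Nat_whiskR2, Hg.
  - apply is_V2Nat_whiskL2; assumption.
Qed.

Section Modifications.
Variables U W : V2CatD V.
Hypothesis HW : is_V2Cat W.

Lemma is_V2Mod_vcomp3 (T S : V2FunD U W) (al be si : V2NatD T S) (nu : V2ModD be si)
  (mu : V2ModD al be) :
  is_V2Fun T -> is_V2Fun S -> is_V2Nat al -> is_V2Nat be -> is_V2Nat si ->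
  is_V2Mod nu -> is_V2Mod mu -> is_V2Mod (vcomp3 nu mu).
Proof.
  intros HT HS Hal Hbe Hsi Hnu Hmu. apply V2Mod_intro. intros A A' f g. unfold vcomp3.
  rewrite arr_hcmp_castl, arr_hcmp_castr.
  transitivity (arr (hcmp (vcmp (nu A') (mu A'))
                          (vcmp (fhom (F1 T A A') f g) (vj _ (fob (F1 T A A') f))))).
  { apply hcmp_congr; try reflexivity. symmetry. apply (vcmp_idr (V2Cat_hom_VCat HW _ _)). }
  rewrite (hcmp_interchange HW).
  transitivity (arr (vcmp (hcmp (fhom (F1 S A A') f g) (nu A))
                          (hcmp (vj _ (fob (F1 S A A') f)) (mu A)))).
  { apply vcmp_congr.
    - apply (V2Nat_natural_ob Hal).
    - apply (V2Nat_natural_ob Hbe).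
    - apply (V2Nat_natural_ob Hsi).
    - apply (V2Mod_natural Hbe Hsi Hnu).
    - rewrite <- (fhom_vj (V2Fun_F1_VFun HT A A') f), <- (fhom_vj (V2Fun_F1_VFun HS A A') f).
      apply (mod_natural_cmp (V2Mod_natural Hal Hbe Hmu)). }
  rewrite <- (hcmp_interchange HW).
  apply hcmp_congr; try reflexivity. apply (vcmp_idr (V2Cat_hom_VCat HW _ _)).
Qed.

Lemma is_V2Mod_id3 (T S : V2FunD U W) (al : V2NatD T S) : is_V2Nat al -> is_V2Mod (id3 al).
Proof. intros Hal. apply V2Mod_intro, (V2Nat_natural_hom Hal). Qed.

Lemma is_V2Mod_whiskL3 (F G H : V2FunD U W) (ga : V2NatD G H) (ps be : V2NatD F G)
  (mu : V2ModD ps be) :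
  is_V2Nat ga -> is_V2Nat ps -> is_V2Nat be -> is_V2Mod mu -> is_V2Mod (whiskL3 ga mu).
Proof.
  intros Hga Hps Hbe Hmu. apply V2Mod_intro. intros A A' f g. unfold whiskL3.
  rewrite arr_hcmp_castl, arr_hcmp_castr.
  etransitivity; [apply (hcmp_assoc_I1 HW)|].
  transitivity (arr (hcmp (vj _ (pt (ga A'))) (hcmp (fhom (F1 G A A') f g) (mu A)))).
  { apply hcmp_congr; try reflexivity; try apply (V2Nat_natural_ob Hps);
      try apply (V2Nat_natural_ob Hbe).
    apply (V2Mod_natural Hps Hbe Hmu). }
  etransitivity; [symmetry; apply (hcmp_assoc_I1 HW)|].
  transitivity (arr (hcmp (hcmp (fhom (F1 H A A') f g) (vj _ (pt (ga A)))) (mu A))).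
  { apply hcmp_congr; try reflexivity; try apply (V2Nat_natural_ob Hga).
    apply (V2Nat_natural_hom Hga). }
  apply (hcmp_assoc_I3 HW).
Qed.

Lemma is_V2Mod_whiskR3 (E F G : V2FunD U W) (ps be : V2NatD F G) (mu : V2ModD ps be)
  (rh : V2NatD E F) :
  is_V2Nat ps -> is_V2Nat be -> is_V2Nat rh -> is_V2Mod mu -> is_V2Mod (whiskR3 mu rh).
Proof.
  intros Hps Hbe Hrh Hmu. apply V2Mod_intro. intros A A' f g. unfold whiskR3.
  rewrite arr_hcmp_castl, arr_hcmp_castr.
  etransitivity; [apply (hcmp_assoc_I2 HW)|].
  transitivity (arr (hcmp (mu A') (hcmp (fhom (F1 F A A') f g) (vj _ (pt (rh A)))))).
  { apply hcmp_congr; try reflexivity; try apply (V2Nat_natural_ob Hrh).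
    apply (V2Nat_natural_hom Hrh). }
  etransitivity; [symmetry; apply (hcmp_assoc_I3 HW)|].
  transitivity (arr (hcmp (hcmp (fhom (F1 G A A') f g) (mu A)) (vj _ (pt (rh A))))).
  { apply hcmp_congr; try reflexivity; try apply (V2Nat_natural_ob Hps);
      try apply (V2Nat_natural_ob Hbe).
    apply (V2Mod_natural Hps Hbe Hmu). }
  apply (hcmp_assoc_I3 HW).
Qed.

Lemma is_V2Mod_hstar3 (F G H : V2FunD U W) (ga si : V2NatD G H) (ps be : V2NatD F G)
  (nu : V2ModD ga si) (mu : V2ModD ps be) :
  is_V2Fun F -> is_V2Fun H -> is_V2Nat ga -> is_V2Nat si -> is_V2Nat ps -> is_V2Nat be ->
  is_V2Mod nu -> is_V2Mod mu -> is_V2Mod (hstar3 nu mu).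
Proof.
  intros HF HH Hga Hsi Hps Hbe Hnu Hmu.
  apply is_V2Mod_vcomp3; try assumption; try (apply (is_V2Nat_bstar HW); assumption).
  - apply is_V2Mod_whiskL3; assumption.
  - apply is_V2Mod_whiskR3; assumption.
Qed.
End Modifications.

Lemma is_V2Mod_whiskL3F (U V' W : V2CatD V) (K : V2FunD V' W) (F H : V2FunD U V')
  (al be : V2NatD F H) (mu : V2ModD al be) :
  is_V2Fun K -> is_V2Nat al -> is_V2Nat be -> is_V2Mod mu -> is_V2Mod (whiskL3F K mu).
Proof.
  intros HK Hal Hbe Hmu. apply V2Mod_intro. intros A A' f g. unfold whiskL3F. simpl.
  rewrite <- !(F1_hcmp HK).
  apply arr_cmp; [apply (V2Mod_natural Hal Hbe Hmu)|].
  apply fhom_congr; [apply (V2Nat_natural_ob Hal)|apply (V2Nat_natural_ob Hbe)].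
Qed.

Lemma is_V2Mod_whiskR3F (U V' W : V2CatD V) (G K : V2FunD V' W) (ga rh : V2NatD G K)
  (nu : V2ModD ga rh) (F : V2FunD U V') :
  is_V2Nat ga -> is_V2Nat rh -> is_V2Mod nu -> is_V2Mod (whiskR3F nu F).
Proof.
  intros Hga Hrh Hnu. apply V2Mod_intro. intros A A' f g.
  apply (mod_natural_cmp (V2Mod_natural Hga Hrh Hnu)).
Qed.

Lemma is_V2Mod_hcomp3 (U V' W : V2CatD V) (HW : is_V2Cat W) (F H : V2FunD U V')
  (G K : V2FunD V' W) (ga rh : V2NatD G K) (al be : V2NatD F H)
  (nu : V2ModD ga rh) (mu : V2ModD al be) :
  is_V2Fun F -> is_V2Fun H -> is_V2Fun G -> is_V2Fun K ->
  is_V2Nat ga -> is_V2Nat rh -> is_V2Nat al -> is_V2Nat be ->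
  is_V2Mod nu -> is_V2Mod mu -> is_V2Mod (hcomp3 nu mu).
Proof.
  intros HF HH HG HK Hga Hrh Hal Hbe Hnu Hmu.
  assert (HKal := is_V2Nat_whiskL2 HK Hal). assert (HKbe := is_V2Nat_whiskL2 HK Hbe).
  assert (HgaF := is_V2Nat_whiskR2 F Hga). assert (HrhF := is_V2Nat_whiskR2 F Hrh).
  apply (is_V2Mod_vcomp3 HW); try (apply is_V2Fun_comp1; assumption);
    try (apply (is_V2Nat_bstar HW); assumption).
  - apply (is_V2Mod_whiskR3 HW); try assumption. apply is_V2Mod_whiskL3F; assumption.
  - apply (is_V2Mod_whiskL3 HW); try assumption. apply is_V2Mod_whiskR3F; assumption.
Qed.
End Closure.

Lemma V2Nat_ext {V : TwoFold} {U W : V2CatD V} {T S : V2FunD U W} (th th' : V2NatD T S) :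
  (forall A, is_VFun (th A)) -> (forall A, is_VFun (th' A)) ->
  (forall A, pt (th A) = pt (th' A)) -> th = th'.
Proof.
  intros H1 H2 H3. apply functional_extensionality_dep. intro A. apply unit_vfun_ext; auto.
Qed.

Ltac solve_VFun :=
  repeat match goal with
  | H : is_V2Nat ?th |- is_VFun (?th _) => apply (V2Nat_VFun H)
  | H : is_V2Fun ?T |- is_VFun (F1 ?T _ _) => apply (V2Fun_F1_VFun H)
  | H : is_V2Cat ?W |- is_VFun (cM ?W _ _ _) => apply (V2Cat_cM_VFun H)
  | H : is_V2Cat ?W |- is_VFun (cJ ?W _) => apply (V2Cat_cJ_VFun H)
  | |- is_VFun (vfcomp _ _) => apply is_VFun_comp
  | |- is_VFun (vftens _ _) => apply is_VFun_tens
  | |- is_VFun (lunit_inv _) => apply is_VFun_lunit_inv_unit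
  | |- is_VFun (vfid _) => apply is_VFun_id
  end.

(* Reduces an equation between 2-cells built from the operations to
   equations between the objects [pt (th A)]. *)
Ltac V2Nat_ext_pt :=
  apply V2Nat_ext;
  [ let A := fresh "A" in intro A;
    cbv beta iota delta [hcomp2 bstar whiskL2 whiskR2 id2 comp1 id1]; cbn [F1 F0];
    solve [solve_VFun] ..
  | let A := fresh "A" in intro A; unfold pt; simpl ].

Section TwoCellEquations.
Variable V : TwoFold.

Section Vertical.
Variables U W : V2CatD V.
Hypothesis HW : is_V2Cat W.

Lemma bstar_assoc (T S R Q : V2FunD U W) (ga : V2NatD T S) (be : V2NatD S R)
  (de : V2NatD R Q) :
  is_V2Nat ga -> is_V2Nat be -> is_V2Nat de -> bstar (bstar de be) ga = bstar de (bstar be ga).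
Proof. intros Hg Hb Hd. V2Nat_ext_pt. apply (cM_assoc HW). Qed.

Lemma bstar_idl (T S : V2FunD U W) (ga : V2NatD T S) : is_V2Nat ga -> bstar (id2 S) ga = ga.
Proof. intros Hg. V2Nat_ext_pt. apply (cM_onel HW). Qed.

Lemma bstar_idr (T S : V2FunD U W) (ga : V2NatD T S) : is_V2Nat ga -> bstar ga (id2 T) = ga.
Proof. intros Hg. V2Nat_ext_pt. apply (cM_oner HW). Qed.
End Vertical.

Section Horizontal.
Variables U V' W : V2CatD V.
Hypothesis HW : is_V2Cat W.

Lemma hcomp2_whisk_swap (F H : V2FunD U V') (G K : V2FunD V' W) (ga : V2NatD G K)
  (al : V2NatD F H) :
  is_V2Fun G -> is_V2Fun K -> is_V2Nat ga -> is_V2Nat al ->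
  hcomp2 ga al = bstar (whiskL2 K al) (whiskR2 ga F).
Proof. intros HG HK Hg Hal. V2Nat_ext_pt. apply (V2Nat_natural_ob Hg). Qed.

Lemma hcomp2_interchange (HV' : is_V2Cat V') (F F' F'' : V2FunD U V') (G G' G'' : V2FunD V' W)
  (al : V2NatD F F') (al' : V2NatD F' F'') (ga : V2NatD G G') (ga' : V2NatD G' G'') :
  is_V2Fun G -> is_V2Fun G' -> is_V2Fun G'' ->
  is_V2Nat al -> is_V2Nat al' -> is_V2Nat ga -> is_V2Nat ga' ->
  hcomp2 (bstar ga' ga) (bstar al' al) = bstar (hcomp2 ga' al') (hcomp2 ga al).
Proof.
  intros HG HG' HG'' Ha Ha' Hg Hg'. V2Nat_ext_pt.
  rewrite (F1_cM HG), !(cM_assoc HW). do 2 f_equal.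
  rewrite <- !(cM_assoc HW). f_equal. f_equal. exact (V2Nat_natural_ob Hg _).
Qed.

Lemma hcomp2_id (HV' : is_V2Cat V') (F : V2FunD U V') (G : V2FunD V' W) :
  is_V2Fun G -> hcomp2 (id2 G) (id2 F) = id2 (comp1 G F).
Proof.
  intros HG. V2Nat_ext_pt. fold (one V' (F0 F A)). rewrite (F1_one HG). apply (cM_onel HW).
Qed.
End Horizontal.

Lemma hcomp2_assoc (U1 U2 U3 U4 : V2CatD V) (H3 : is_V2Cat U3) (H4 : is_V2Cat U4)
  (F F' : V2FunD U1 U2) (G G' : V2FunD U2 U3) (H H' : V2FunD U3 U4)
  (al : V2NatD F F') (ga : V2NatD G G') (de : V2NatD H H') :
  is_V2Fun G -> is_V2Fun H -> is_V2Nat al -> is_V2Nat ga -> is_V2Nat de ->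
  hcomp2 (hcomp2 de ga) al = hcomp2 de (hcomp2 ga al).
Proof. intros HG HH Ha Hg Hd. V2Nat_ext_pt. rewrite (F1_cM HH). apply (cM_assoc H4). Qed.

Lemma hcomp2_idl (U W : V2CatD V) (HW : is_V2Cat W) (F H : V2FunD U W) (al : V2NatD F H) :
  is_V2Nat al -> hcomp2 (id2 (id1 W)) al = al.
Proof. intros Ha. V2Nat_ext_pt. apply (cM_onel HW). Qed.

Lemma hcomp2_idr (U W : V2CatD V) (HU : is_V2Cat U) (HW : is_V2Cat W) (F H : V2FunD U W) (al : V2NatD F H) :
  is_V2Fun F -> is_V2Nat al -> hcomp2 al (id2 (id1 U)) = al.
Proof.
  intros HF Ha. V2Nat_ext_pt. fold (one U A). rewrite (F1_one HF). apply (cM_oner HW).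
Qed.

Lemma comp1_assoc (U1 U2 U3 U4 : V2CatD V) (F : V2FunD U1 U2) (G : V2FunD U2 U3)
  (H : V2FunD U3 U4) :
  comp1 (comp1 H G) F = comp1 H (comp1 G F).
Proof.
  unfold comp1; simpl. f_equal. apply functional_extensionality_dep; intro A.
  apply functional_extensionality_dep; intro B. apply vfcomp_assoc.
Qed.

Lemma comp1_idl (U W : V2CatD V) (F : V2FunD U W) : comp1 (id1 W) F = F.
Proof.
  destruct F as [f0 f1]. unfold comp1; simpl. f_equal.
  apply functional_extensionality_dep; intro A.
  apply functional_extensionality_dep; intro B. apply vfcomp_idl.
Qed.

Lemma comp1_idr (U W : V2CatD V) (F : V2FunD U W) : comp1 F (id1 U) = F.
Proof.
  destruct F as [f0 f1]. unfold comp1; simpl. f_equal.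
  apply functional_extensionality_dep; intro A.
  apply functional_extensionality_dep; intro B. apply vfcomp_idr.
Qed.
End TwoCellEquations.

Section ThreeCellEquations.
Variable V : TwoFold.
Notation I := (Iu V).

Lemma mod_JMeq {U W : V2CatD V} (f0 g0 : c0 U -> c0 W)
  (th ph th' ph' : forall A, VFunD unitVC (chom W (f0 A) (g0 A)))
  (m : forall A, Hom I (vhom _ (pt (th A)) (pt (ph A))))
  (m' : forall A, Hom I (vhom _ (pt (th' A)) (pt (ph' A)))) :
  th = th' -> ph = ph' -> (forall A, arr (m A) = arr (m' A)) -> JMeq m m'.
Proof.
  intros e1 e2 H. subst.
  assert (m = m') as ->; [|reflexivity].
  apply functional_extensionality_dep. intro A. apply arr_inj, H.
Qed.

Lemma mod_ext {U W : V2CatD V} {T S : V2FunD U W} (th ph : V2NatD T S) (m m' : V2ModD th ph) :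
  (forall A, arr (m A) = arr (m' A)) -> m = m'.
Proof. intros H. apply functional_extensionality_dep. intro A. apply arr_inj, H. Qed.

Lemma vcomp3E {U W : V2CatD V} {T S : V2FunD U W} (al be si : V2NatD T S)
  (nu : V2ModD be si) (mu : V2ModD al be) A :
  vcomp3 nu mu A = vcmp (nu A) (mu A) ∘ castm (eq_sym (unit_l (mon1 V) I)).
Proof. reflexivity. Qed.

Lemma arr_vcomp3 {U W : V2CatD V} {T S : V2FunD U W} (al be si : V2NatD T S)
  (nu : V2ModD be si) (mu : V2ModD al be) A :
  arr (vcomp3 nu mu A) = arr (vcmp (nu A) (mu A)).
Proof. apply arr_cmp_castr. Qed.

Lemma whiskL3E {U W : V2CatD V} (F G H : V2FunD U W) (ga : V2NatD G H)
  (ps be : V2NatD F G) (mu : V2ModD ps be) A :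
  whiskL3 ga mu A = hcmp (vj _ (pt (ga A))) (mu A) ∘ castm (eq_sym (unit_l (mon2 V) I)).
Proof. reflexivity. Qed.

Lemma whiskR3E {U W : V2CatD V} (E F G : V2FunD U W) (ps be : V2NatD F G)
  (mu : V2ModD ps be) (rh : V2NatD E F) A :
  whiskR3 mu rh A = hcmp (mu A) (vj _ (pt (rh A))) ∘ castm (eq_sym (unit_l (mon2 V) I)).
Proof. reflexivity. Qed.

Section OneCell.
Variables U W : V2CatD V.
Hypothesis HW : is_V2Cat W.

Lemma arr_hstar3 (F G H : V2FunD U W) (ga si : V2NatD G H) (ps be : V2NatD F G)
  (nu : V2ModD ga si) (mu : V2ModD ps be) A :
  arr (hstar3 nu mu A) = arr (hcmp (nu A) (mu A)).
Proof.
  unfold hstar3. rewrite arr_vcomp3, whiskL3E, whiskR3E.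
  rewrite arr_vcmp_castl, arr_vcmp_castr, <- (hcmp_interchange HW).
  apply hcmp_congr; try reflexivity.
  - apply (vcmp_idl (V2Cat_hom_VCat HW _ _)).
  - apply (vcmp_idr (V2Cat_hom_VCat HW _ _)).
Qed.

Lemma vcomp3_assoc (T S : V2FunD U W) (al be si ta : V2NatD T S)
  (mu : V2ModD al be) (nu : V2ModD be si) (xi : V2ModD si ta) :
  vcomp3 (vcomp3 xi nu) mu = vcomp3 xi (vcomp3 nu mu).
Proof.
  apply mod_ext; intro A. rewrite !vcomp3E, !arr_cmp_castr.
  rewrite arr_vcmp_castl, arr_vcmp_castr, (vcmp_assoc (V2Cat_hom_VCat HW _ _)).
  apply arr_cmp_trivr. arr_trivial.
Qed.

Lemma vcomp3_idl (T S : V2FunD U W) (al be : V2NatD T S) (mu : V2ModD al be) :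
  vcomp3 (id3 be) mu = mu.
Proof. apply mod_ext; intro A. rewrite arr_vcomp3. apply (vcmp_idl (V2Cat_hom_VCat HW _ _)). Qed.

Lemma vcomp3_idr (T S : V2FunD U W) (al be : V2NatD T S) (mu : V2ModD al be) :
  vcomp3 mu (id3 al) = mu.
Proof. apply mod_ext; intro A. rewrite arr_vcomp3. apply (vcmp_idr (V2Cat_hom_VCat HW _ _)). Qed.

Lemma hstar3_assoc (F G H K : V2FunD U W)
  (ps be : V2NatD F G) (ga si : V2NatD G H) (de ep : V2NatD H K)
  (mu : V2ModD ps be) (nu : V2ModD ga si) (xi : V2ModD de ep) :
  is_V2Nat ps -> is_V2Nat be -> is_V2Nat ga -> is_V2Nat si -> is_V2Nat de -> is_V2Nat ep ->
  JMeq (hstar3 (hstar3 xi nu) mu) (hstar3 xi (hstar3 nu mu)).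
Proof.
  intros Hps Hbe Hga Hsi Hde Hep.
  apply mod_JMeq; try (apply (bstar_assoc HW); assumption).
  intro A. rewrite !arr_hstar3.
  transitivity (arr (hcmp (hcmp (xi A) (nu A)) (mu A))).
  { apply hcmp_congr; try reflexivity. apply arr_hstar3. }
  rewrite (hcmp_assoc_I1 HW). apply hcmp_congr; try reflexivity. symmetry; apply arr_hstar3.
Qed.

Lemma hstar3_idl (F G : V2FunD U W) (ps be : V2NatD F G) (mu : V2ModD ps be) :
  is_V2Nat ps -> is_V2Nat be -> JMeq (hstar3 (id3 (id2 G)) mu) mu.
Proof.
  intros Hps Hbe. apply mod_JMeq; try (apply (bstar_idl HW); assumption).
  intro A. rewrite arr_hstar3. apply (hcmp_onel HW).
Qed.

Lemma hstar3_idr (F G : V2FunD U W) (ps be : V2NatD F G) (mu : V2ModD ps be) :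
  is_V2Nat ps -> is_V2Nat be -> JMeq (hstar3 mu (id3 (id2 F))) mu.
Proof.
  intros Hps Hbe. apply mod_JMeq; try (apply (bstar_idr HW); assumption).
  intro A. rewrite arr_hstar3. apply (hcmp_oner HW).
Qed.

Lemma hstar3_vcomp3 (F G H : V2FunD U W)
  (ps be om : V2NatD F G) (ga si ta : V2NatD G H)
  (mu : V2ModD ps be) (mu' : V2ModD be om) (nu : V2ModD ga si) (nu' : V2ModD si ta) :
  hstar3 (vcomp3 nu' nu) (vcomp3 mu' mu) = vcomp3 (hstar3 nu' mu') (hstar3 nu mu).
Proof.
  apply mod_ext; intro A. rewrite arr_hstar3, (arr_vcomp3 (hstar3 nu' mu') (hstar3 nu mu)).
  transitivity (arr (hcmp (vcmp (nu' A) (nu A)) (vcmp (mu' A) (mu A)))).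
  { apply hcmp_congr; try reflexivity; apply arr_vcomp3. }
  rewrite (hcmp_interchange HW). apply vcmp_congr; try reflexivity; symmetry; apply arr_hstar3.
Qed.

Lemma hstar3_id (F G H : V2FunD U W) (ps : V2NatD F G) (ga : V2NatD G H) :
  hstar3 (id3 ga) (id3 ps) = id3 (bstar ga ps).
Proof. apply mod_ext; intro A. rewrite arr_hstar3. apply (hcmp_vj HW). Qed.
End OneCell.

Lemma arr_hcomp3 (U V' W : V2CatD V) (HW : is_V2Cat W) (F H : V2FunD U V') (G K : V2FunD V' W)
  (ga rh : V2NatD G K) (al be : V2NatD F H) (nu : V2ModD ga rh) (mu : V2ModD al be) A :
  arr (hcomp3 nu mu A) = arr (hcmp (fhom (F1 K (F0 F A) (F0 H A)) _ _ ∘ mu A) (nu (F0 F A))).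
Proof.
  unfold hcomp3. rewrite arr_vcomp3, whiskL3E, whiskR3E. unfold whiskL3F, whiskR3F.
  rewrite arr_vcmp_castl, arr_vcmp_castr, <- (hcmp_interchange HW).
  apply hcmp_congr; try reflexivity.
  - apply (vcmp_idr (V2Cat_hom_VCat HW _ _)).
  - apply (vcmp_idl (V2Cat_hom_VCat HW _ _)).
Qed.

Section ZeroCell.
Variables U V' W : V2CatD V.
Hypothesis HV' : is_V2Cat V'.
Hypothesis HW : is_V2Cat W.

Lemma hcomp3_vcomp3 (F H : V2FunD U V') (G K : V2FunD V' W)
  (al be om : V2NatD F H) (ga rh ta : V2NatD G K)
  (mu : V2ModD al be) (mu' : V2ModD be om) (nu : V2ModD ga rh) (nu' : V2ModD rh ta) :
  is_V2Fun K ->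
  hcomp3 (vcomp3 nu' nu) (vcomp3 mu' mu) = vcomp3 (hcomp3 nu' mu') (hcomp3 nu mu).
Proof.
  intros HK. apply mod_ext; intro A.
  rewrite (arr_hcomp3 HW), (arr_vcomp3 (hcomp3 nu' mu') (hcomp3 nu mu)).
  transitivity (arr (hcmp (vcmp (fhom (F1 K _ _) _ _ ∘ mu' A) (fhom (F1 K _ _) _ _ ∘ mu A))
                          (vcmp (nu' (F0 F A)) (nu (F0 F A))))).
  { apply hcmp_congr; try reflexivity; [|apply arr_vcomp3].
    rewrite vcomp3E, cmp_assoc, arr_cmp_castr, (fhom_vcmp (V2Fun_F1_VFun HK _ _)).
    reflexivity. }
  rewrite (hcmp_interchange HW).
  apply vcmp_congr; try reflexivity; symmetry; apply (arr_hcomp3 HW).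
Qed.

Lemma hcomp3_id (F H : V2FunD U V') (G K : V2FunD V' W) (al : V2NatD F H) (ga : V2NatD G K) :
  is_V2Fun G -> is_V2Fun K -> is_V2Nat al -> is_V2Nat ga ->
  JMeq (hcomp3 (id3 ga) (id3 al)) (id3 (hcomp2 ga al)).
Proof.
  intros HG HK Hal Hga.
  apply mod_JMeq; try (symmetry; apply (hcomp2_whisk_swap HW); assumption).
  intro A. rewrite (arr_hcomp3 HW). unfold id3.
  rewrite (fhom_vj (V2Fun_F1_VFun HK _ _)), (hcmp_vj HW). apply arr_vj.
  unfold pt; simpl. symmetry. exact (V2Nat_natural_ob Hga _).
Qed.

Lemma hcomp3_hstar3_source (F F' F'' : V2FunD U V') (G G' G'' : V2FunD V' W)
  (al : V2NatD F F') (al' : V2NatD F' F'') (ga : V2NatD G G') (ga' : V2NatD G' G'') :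
  is_V2Fun G' -> is_V2Fun G'' ->
  is_V2Nat al -> is_V2Nat al' -> is_V2Nat ga -> is_V2Nat ga' ->
  bstar (whiskL2 G'' (bstar al' al)) (whiskR2 (bstar ga' ga) F)
  = bstar (bstar (whiskL2 G'' al') (whiskR2 ga' F')) (bstar (whiskL2 G' al) (whiskR2 ga F)).
Proof.
  intros HG' HG'' Ha Ha' Hg Hg'. V2Nat_ext_pt.
  rewrite (F1_cM HG''), !(cM_assoc HW). do 2 f_equal.
  rewrite <- !(cM_assoc HW). do 2 f_equal. symmetry. exact (V2Nat_natural_ob Hg' _).
Qed.

Lemma hcomp3_hstar3 (F F' F'' : V2FunD U V') (G G' G'' : V2FunD V' W)
  (al be : V2NatD F F') (al' be' : V2NatD F' F'')
  (ga rh : V2NatD G G') (ga' rh' : V2NatD G' G'')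
  (mu : V2ModD al be) (mu' : V2ModD al' be') (nu : V2ModD ga rh) (nu' : V2ModD ga' rh') :
  is_V2Fun G' -> is_V2Fun G'' ->
  is_V2Nat al -> is_V2Nat be -> is_V2Nat al' -> is_V2Nat be' ->
  is_V2Nat ga -> is_V2Nat rh -> is_V2Nat ga' -> is_V2Nat rh' -> is_V2Mod nu' ->
  JMeq (hcomp3 (hstar3 nu' nu) (hstar3 mu' mu)) (hstar3 (hcomp3 nu' mu') (hcomp3 nu mu)).
Proof.
  intros HG' HG'' Hal Hbe Hal' Hbe' Hga Hrh Hga' Hrh' Hnu'.
  apply mod_JMeq; try (apply hcomp3_hstar3_source; assumption).
  intro A. rewrite (arr_hcomp3 HW), (arr_hstar3 HW).
  assert (E1 := V2Nat_natural_ob Hga' (pt (al A))).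
  assert (E2 := V2Nat_natural_ob Hrh' (pt (be A))).
  unfold pt in E1, E2; simpl in E1, E2.
  transitivity (arr (hcmp (hcmp (fhom (F1 G'' _ _) _ _ ∘ mu' A) (fhom (F1 G'' _ _) _ _ ∘ mu A))
                          (hcmp (nu' (F0 F A)) (nu (F0 F A))))).
  { apply hcmp_congr; try reflexivity; try apply (F1_cM HG'').
    - transitivity (arr (fhom (F1 G'' _ _) _ _ ∘ hcmp (mu' A) (mu A))).
      + apply arr_cmp; [apply (arr_hstar3 HV')|reflexivity].
      + apply (F1_hcmp HG'').
    - apply (arr_hstar3 HW). }
  transitivity (arr (hcmp (hcmp (fhom (F1 G'' _ _) _ _ ∘ mu' A) (nu' (F0 F' A)))
                          (hcmp (fhom (F1 G' _ _) _ _ ∘ mu A) (nu (F0 F A))))).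
  2:{ apply hcmp_congr; try reflexivity; symmetry; apply (arr_hcomp3 HW). }
  (* reassociate, then move [nu'] past the image of [mu] by naturality of [nu'] *)
  rewrite (hcmp_assoc_I1 HW).
  transitivity (arr (hcmp (fhom (F1 G'' _ _) _ _ ∘ mu' A)
                 (hcmp (hcmp (fhom (F1 G'' _ _) _ _ ∘ mu A) (nu' (F0 F A))) (nu (F0 F A))))).
  { apply hcmp_congr; try reflexivity; try (symmetry; apply (cM_assoc HW)).
    symmetry; apply (hcmp_assoc_I1 HW). }
  transitivity (arr (hcmp (fhom (F1 G'' _ _) _ _ ∘ mu' A)
                 (hcmp (hcmp (nu' (F0 F' A)) (fhom (F1 G' _ _) _ _ ∘ mu A)) (nu (F0 F A))))).
  { apply hcmp_congr; try reflexivity.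
    - do 2 f_equal. symmetry; exact E1.
    - do 2 f_equal. symmetry; exact E2.
    - apply hcmp_congr; try reflexivity; try (symmetry; exact E1); try (symmetry; exact E2).
      symmetry. apply (mod_natural_cmp (V2Mod_natural Hga' Hrh' Hnu')). }
  transitivity (arr (hcmp (fhom (F1 G'' _ _) _ _ ∘ mu' A)
                 (hcmp (nu' (F0 F' A)) (hcmp (fhom (F1 G' _ _) _ _ ∘ mu A) (nu (F0 F A)))))).
  { apply hcmp_congr; try reflexivity; try apply (cM_assoc HW). apply (hcmp_assoc_I1 HW). }
  symmetry. apply (hcmp_assoc_I1 HW).
Qed.
End ZeroCell.

Section Associativity.
Variables U1 U2 U3 U4 : V2CatD V.
Hypothesis H3 : is_V2Cat U3.
Hypothesis H4 : is_V2Cat U4.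

Lemma hcomp3_assoc_source (F F' : V2FunD U1 U2) (G G' : V2FunD U2 U3) (H H' : V2FunD U3 U4)
  (al : V2NatD F F') (ga : V2NatD G G') (de : V2NatD H H') :
  is_V2Fun G' -> is_V2Fun H' -> is_V2Nat al -> is_V2Nat ga -> is_V2Nat de ->
  bstar (whiskL2 (comp1 H' G') al) (whiskR2 (bstar (whiskL2 H' ga) (whiskR2 de G)) F)
  = bstar (whiskL2 H' (bstar (whiskL2 G' al) (whiskR2 ga F))) (whiskR2 de (comp1 G F)).
Proof.
  intros HG' HH' Ha Hg Hd. V2Nat_ext_pt. rewrite (F1_cM HH'), (cM_assoc H4). reflexivity.
Qed.

Lemma hcomp3_assoc (F F' : V2FunD U1 U2) (G G' : V2FunD U2 U3) (H H' : V2FunD U3 U4)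
  (al be : V2NatD F F') (ga rh : V2NatD G G') (de ep : V2NatD H H')
  (mu : V2ModD al be) (nu : V2ModD ga rh) (xi : V2ModD de ep) :
  is_V2Fun G' -> is_V2Fun H' -> is_V2Nat al -> is_V2Nat be -> is_V2Nat ga -> is_V2Nat rh ->
  is_V2Nat de -> is_V2Nat ep ->
  JMeq (hcomp3 (hcomp3 xi nu) mu) (hcomp3 xi (hcomp3 nu mu)).
Proof.
  intros HG' HH' Ha Hb Hg Hr Hd He.
  apply mod_JMeq; try (apply hcomp3_assoc_source; assumption).
  intro A. etransitivity; [apply (arr_hcomp3 H4 (hcomp3 xi nu) mu A)|].
  etransitivity; [|symmetry; apply (arr_hcomp3 H4 xi (hcomp3 nu mu) A)].
  transitivity (arr (hcmp (fhom (F1 H' _ _) _ _ ∘ (fhom (F1 G' _ _) _ _ ∘ mu A))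
                          (hcmp (fhom (F1 H' _ _) _ _ ∘ nu (F0 F A)) (xi (F0 G (F0 F A)))))).
  { apply hcmp_congr; try reflexivity; [simpl; rewrite cmp_assoc; reflexivity|].
    apply (arr_hcomp3 H4). }
  rewrite <- (hcmp_assoc_I1 H4).
  apply hcmp_congr; try reflexivity; try (symmetry; apply (F1_cM HH')).
  rewrite <- (F1_hcmp HH').
  apply arr_cmp; [symmetry; apply (arr_hcomp3 H3)|reflexivity].
Qed.
End Associativity.

Section Units.
Variables U W : V2CatD V.
Hypothesis HU : is_V2Cat U.
Hypothesis HW : is_V2Cat W.

Lemma hcomp3_idl_source (F H : V2FunD U W) (al : V2NatD F H) :
  is_V2Nat al -> bstar (whiskL2 (id1 W) al) (whiskR2 (id2 (id1 W)) F) = al.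
Proof. intros Ha. V2Nat_ext_pt. apply (cM_oner HW). Qed.

Lemma hcomp3_idl (F H : V2FunD U W) (al be : V2NatD F H) (mu : V2ModD al be) :
  is_V2Nat al -> is_V2Nat be -> JMeq (hcomp3 (id3 (id2 (id1 W))) mu) mu.
Proof.
  intros Ha Hb. apply mod_JMeq; try (apply hcomp3_idl_source; assumption).
  intro A. etransitivity; [apply (arr_hcomp3 HW (id3 (id2 (id1 W))) mu A)|]. simpl.
  rewrite <- (hcmp_oner HW (mu A)).
  apply hcmp_congr; try reflexivity. apply arr_cmp_idl.
Qed.

Lemma hcomp3_idr_source (G K : V2FunD U W) (ga : V2NatD G K) :
  is_V2Fun K -> is_V2Nat ga -> bstar (whiskL2 K (id2 (id1 U))) (whiskR2 ga (id1 U)) = ga.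
Proof.
  intros HK Hg. V2Nat_ext_pt. fold (one U A). rewrite (F1_one HK). apply (cM_onel HW).
Qed.

Lemma hcomp3_idr (G K : V2FunD U W) (ga rh : V2NatD G K) (nu : V2ModD ga rh) :
  is_V2Fun K -> is_V2Nat ga -> is_V2Nat rh -> JMeq (hcomp3 nu (id3 (id2 (id1 U)))) nu.
Proof.
  intros HK Hg Hr. apply mod_JMeq; try (apply hcomp3_idr_source; assumption).
  intro A. etransitivity; [apply (arr_hcomp3 HW nu (id3 (id2 (id1 U))) A)|].
  unfold id3, id2, id1; simpl.
  rewrite (fhom_vj (V2Fun_F1_VFun HK _ _)), <- (hcmp_onel HW (nu A)).
  apply hcmp_congr; try reflexivity; try apply (F1_one HK). apply arr_vj, (F1_one HK).
Qed.
End Units.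
End ThreeCellEquations.

Ltac cells_ok := repeat first [apply fok | apply nok | apply mok | apply v2ok | assumption].

Ltac split_laws :=
  repeat match goal with |- _ /\ _ => split end; intros;
  repeat match goal with |- _ /\ _ => split end.

Section Laws.
Variable V : TwoFold.

Lemma V2Cat_closure_laws : closure_laws V.
Proof.
  unfold closure_laws; split_laws.
  - apply is_V2Fun_comp1; cells_ok.
  - apply is_V2Fun_id1.
  - apply is_V2Nat_bstar; cells_ok.
  - apply is_V2Nat_id2; cells_ok.
  - apply is_V2Nat_whiskL2; cells_ok.
  - apply is_V2Nat_whiskR2; cells_ok.
  - apply is_V2Nat_hcomp2; cells_ok.
  - apply is_V2Mod_vcomp3; cells_ok.
  - apply is_V2Mod_id3; cells_ok.
  - apply is_V2Mod_whiskL3; cells_ok.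
  - apply is_V2Mod_whiskR3; cells_ok.
  - apply is_V2Mod_hstar3; cells_ok.
  - apply is_V2Mod_whiskL3F; cells_ok.
  - apply is_V2Mod_whiskR3F; cells_ok.
  - apply hcomp2_whisk_swap; cells_ok.
  - apply is_V2Mod_hcomp3; cells_ok.
Qed.

Lemma V2Cat_hom_2category_laws : hom_2category_laws V.
Proof.
  unfold hom_2category_laws; split_laws.
  - apply vcomp3_assoc; cells_ok.
  - apply vcomp3_idl; cells_ok.
  - apply vcomp3_idr; cells_ok.
  - apply bstar_assoc; cells_ok.
  - apply bstar_idl; cells_ok.
  - apply bstar_idr; cells_ok.
  - apply hstar3_assoc; cells_ok.
  - apply hstar3_idl; cells_ok.
  - apply hstar3_idr; cells_ok.
  - apply hstar3_vcomp3; cells_ok.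
  - apply hstar3_id; cells_ok.
Qed.

Lemma V2Cat_composition_2functor_laws : composition_2functor_laws V.
Proof.
  unfold composition_2functor_laws; split_laws.
  - apply hcomp2_interchange; cells_ok.
  - apply hcomp2_id; cells_ok.
  - apply hcomp3_vcomp3; cells_ok.
  - apply hcomp3_id; cells_ok.
  - apply hcomp3_hstar3; cells_ok.
Qed.

Lemma V2Cat_associativity_unit_laws : associativity_unit_laws V.
Proof.
  unfold associativity_unit_laws; split_laws.
  - apply comp1_assoc.
  - apply comp1_idl.
  - apply comp1_idr.
  - apply hcomp2_assoc; cells_ok.
  - apply hcomp2_idl; cells_ok.
  - apply hcomp2_idr; cells_ok.
  - apply hcomp3_assoc; cells_ok.
  - apply hcomp3_idl; cells_ok.
  - apply hcomp3_idr; cells_ok.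
Qed.
End Laws.

Theorem mainTheorem1 (V : TwoFold) : V2Cat_strict_3category V.
Proof.
  split; [apply V2Cat_closure_laws|].
  split; [apply V2Cat_hom_2category_laws|].
  split; [apply V2Cat_composition_2functor_laws|apply V2Cat_associativity_unit_laws].
Qed.
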